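(* No graph of the form $G_4\star G_4'$ (with $G_4,G_4'$ any graphs on $4$ vertices) is $3$-ball packable, except $C_4\star C_4$.
   Context: $C_4$ is the $4$-cycle, $\star$ the graph join. A $3$-ball in $\hat{\mathbb R}^3$ is a closed ball, closed exterior of an open ball with $\infty$, or a closed half-space with $\infty$; a $3$-ball packing is a collection of $3$-balls with disjoint interiors; its tangency graph joins balls meeting in exactly one point; a graph is $3$-ball packable if isomorphic to the tangency graph of some $3$-ball packing. *)

From Stdlib Require Import Reals.
From mathcomp Require Import all_boot.

Set Implicit Arguments.
Unset Strict Implicit.

Local Open Scope R_scope.

Definition R3 : Type := (R * R * R)%type.

(* points of \hat R^3 : [Some x] for x in R^3, [None] is the point at infinity *)
Definition pt : Type := option R3.

Definition dot (x y : R3) : R :=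
  let '(x1, x2, x3) := x in let '(y1, y2, y3) := y in
  Rplus (Rplus (Rmult x1 y1) (Rmult x2 y2)) (Rmult x3 y3).

Definition sub3 (x y : R3) : R3 :=
  let '(x1, x2, x3) := x in let '(y1, y2, y3) := y in
  (Rminus x1 y1, Rminus x2 y2, Rminus x3 y3).

Definition dist2 (x y : R3) : R := dot (sub3 x y) (sub3 x y).

Definition zero3 : R3 := (R0, R0, R0).

Definition closed_ball (c : R3) (r : R) (p : pt) : Prop :=
  match p with Some x => (dist2 x c <= r * r) | None => False end.

Definition closed_exterior (c : R3) (r : R) (p : pt) : Prop :=
  match p with Some x => (r * r <= dist2 x c) | None => True end.

Definition closed_halfspace (n : R3) (b : R) (p : pt) : Prop :=
  match p with Some x => (b <= dot n x) | None => True end.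

Definition same_set (A B : pt -> Prop) : Prop := forall p, A p <-> B p.

Definition is_3ball (B : pt -> Prop) : Prop :=
  (exists c r, (0 < r) /\ same_set B (closed_ball c r)) \/
  (exists c r, (0 < r) /\ same_set B (closed_exterior c r)) \/
  (exists n b, n <> zero3 /\ same_set B (closed_halfspace n b)).

(* basic neighbourhoods of the (one-point compactification) topology of \hat R^3 *)
Definition basic_nbhd (p : pt) (eps : R) (q : pt) : Prop :=
  match p, q with
  | Some x, Some y => (dist2 y x < eps * eps)
  | Some _, None => False
  | None, None => True
  | None, Some y => (/ (eps * eps) < dist2 y zero3)
  end.

Definition interior (S : pt -> Prop) (p : pt) : Prop :=
  exists eps, (0 < eps) /\ forall q, basic_nbhd p eps q -> S q.

Definition meet_in_one_point (A B : pt -> Prop) : Prop :=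
  exists p, A p /\ B p /\ forall q, A q -> B q -> q = p.

Definition ball3_packable (V : Type) (adj : V -> V -> Prop) : Prop :=
  exists B : V -> pt -> Prop,
    (forall v, is_3ball (B v)) /\
    (forall u v, u <> v -> forall p, ~ (interior (B u) p /\ interior (B v) p)) /\
    (forall u v, u <> v -> (adj u v <-> meet_in_one_point (B u) (B v))).

Local Close Scope R_scope.

Definition simple_graph4 (G : rel 'I_4) : Prop := symmetric G /\ irreflexive G.

Definition C4 : rel 'I_4 :=
  fun i j => ((i.+1 %% 4)%N == j) || ((j.+1 %% 4)%N == i).

Definition graph_iso4 (G H : rel 'I_4) : Prop :=
  exists f : 'I_4 -> 'I_4, bijective f /\ forall x y, G x y = H (f x) (f y).

Definition graph_join (G G' : rel 'I_4) (u v : 'I_4 + 'I_4) : Prop :=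
  match u, v with
  | inl a, inl b => G a b
  | inr a, inr b => G' a b
  | _, _ => True
  end.

From Pilot Require Import Defs.
From Stdlib Require Import Reals Lra Lia Psatz Classical IndefiniteDescription.
From mathcomp Require all_boot all_algebra Rstruct.

(* The proof uses the Lorentzian model of Moebius geometry.  Each 3-ball of
   \hat R^3 (closed ball, closed exterior of a ball, closed half-space) is
   encoded by a unit vector of Minkowski space R^{4,1}.  For two 3-balls with
   disjoint interiors the Lorentz product of their vectors is <= -1; it equals
   -1 when they are tangent, and it is < -1 when they are disjoint (a product
   -1 between non-tangent balls occurs only for complementary balls, whose
   vectors are opposite).

   A packing of G4 * G4' therefore yields unit vectors a_0..a_3 and b_0..b_3
   with products -1 across the two families and <= -1 inside each family.
   Linear algebra in R^{4,1} shows that the a_i lie on an affine plane that is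
   Euclidean; its point f orthogonal to the plane has lform f f <= -1, and
   comparing f with the corresponding point g of the b_j by the reverse
   Cauchy-Schwarz inequality gives lform f f = -1.  Then the a_i - f are four
   vectors of equal length in a Euclidean plane that are pairwise non-acute, so
   they form a square: exactly the pairs of a perfect matching have products
   < -1.  Hence G4 is K4 minus a perfect matching, i.e. C4, and likewise G4'. *)

Open Scope R_scope.

Record lvec := LVec { lv1 : R; lv2 : R; lv3 : R; lv4 : R; lv5 : R }.

Definition lform (u v : lvec) : R :=
  lv1 u * lv1 v + lv2 u * lv2 v + lv3 u * lv3 v + lv4 u * lv4 v - lv5 u * lv5 v.

Definition ladd (u v : lvec) : lvec :=
  LVec (lv1 u + lv1 v) (lv2 u + lv2 v) (lv3 u + lv3 v) (lv4 u + lv4 v) (lv5 u + lv5 v).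
Definition lscal (k : R) (u : lvec) : lvec :=
  LVec (k * lv1 u) (k * lv2 u) (k * lv3 u) (k * lv4 u) (k * lv5 u).
Definition lsub (u v : lvec) : lvec := ladd u (lscal (-1) v).
Definition lopp (u : lvec) : lvec := lscal (-1) u.
Definition lzero : lvec := LVec 0 0 0 0 0.

Lemma lvec_ext (u v : lvec) :
  lv1 u = lv1 v -> lv2 u = lv2 v -> lv3 u = lv3 v -> lv4 u = lv4 v -> lv5 u = lv5 v -> u = v.
Proof. destruct u, v; simpl; intros; subst; reflexivity. Qed.

Lemma lform_sym u v : lform u v = lform v u.
Proof. unfold lform; ring. Qed.

Section Bilinearity.
Variables u v w : lvec.
Variable k : R.
Lemma lform_addl : lform (ladd u v) w = lform u w + lform v w. Proof. unfold lform; simpl; ring. Qed.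
Lemma lform_addr : lform w (ladd u v) = lform w u + lform w v. Proof. unfold lform; simpl; ring. Qed.
Lemma lform_scall : lform (lscal k u) w = k * lform u w. Proof. unfold lform; simpl; ring. Qed.
Lemma lform_scalr : lform w (lscal k u) = k * lform w u. Proof. unfold lform; simpl; ring. Qed.
Lemma lform_subl : lform (lsub u v) w = lform u w - lform v w. Proof. unfold lform; simpl; ring. Qed.
Lemma lform_subr : lform w (lsub u v) = lform w u - lform w v. Proof. unfold lform; simpl; ring. Qed.
Lemma lform_oppl : lform (lopp u) w = - lform u w. Proof. unfold lform; simpl; ring. Qed.
Lemma lform_oppr : lform w (lopp u) = - lform w u. Proof. unfold lform; simpl; ring. Qed.
Lemma lform_zerol : lform lzero w = 0. Proof. unfold lform; simpl; ring. Qed.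
End Bilinearity.

Hint Rewrite lform_addl lform_addr lform_scall lform_scalr lform_subl lform_subr
  lform_oppl lform_oppr lform_zerol : lform.

Lemma lform_nondegenerate y : (forall u, lform y u = 0) -> y = lzero.
Proof.
intro H.
pose proof (H (LVec 1 0 0 0 0)); pose proof (H (LVec 0 1 0 0 0));
pose proof (H (LVec 0 0 1 0 0)); pose proof (H (LVec 0 0 0 1 0));
pose proof (H (LVec 0 0 0 0 1)).
unfold lform in *; simpl in *; apply lvec_ext; simpl; lra.
Qed.

(* Cauchy-Schwarz in R^4, via Lagrange's identity. *)
Lemma cauchy_schwarz4 x1 x2 x3 x4 w1 w2 w3 w4 :
  (x1*w1 + x2*w2 + x3*w3 + x4*w4) * (x1*w1 + x2*w2 + x3*w3 + x4*w4)
  <= (x1*x1 + x2*x2 + x3*x3 + x4*x4) * (w1*w1 + w2*w2 + w3*w3 + w4*w4).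
Proof.
assert (E : (x1*x1 + x2*x2 + x3*x3 + x4*x4) * (w1*w1 + w2*w2 + w3*w3 + w4*w4)
  - (x1*w1 + x2*w2 + x3*w3 + x4*w4) * (x1*w1 + x2*w2 + x3*w3 + x4*w4)
  = (x1*w2-x2*w1)*(x1*w2-x2*w1) + (x1*w3-x3*w1)*(x1*w3-x3*w1) + (x1*w4-x4*w1)*(x1*w4-x4*w1)
  + (x2*w3-x3*w2)*(x2*w3-x3*w2) + (x2*w4-x4*w2)*(x2*w4-x4*w2) + (x3*w4-x4*w3)*(x3*w4-x4*w3))
  by ring.
pose proof (Rle_0_sqr (x1*w2-x2*w1)); pose proof (Rle_0_sqr (x1*w3-x3*w1));
pose proof (Rle_0_sqr (x1*w4-x4*w1)); pose proof (Rle_0_sqr (x2*w3-x3*w2));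
pose proof (Rle_0_sqr (x2*w4-x4*w2)); pose proof (Rle_0_sqr (x3*w4-x4*w3)).
unfold Rsqr in *; lra.
Qed.

Lemma timelike_perp_pos (w x : lvec) :
  lform w w < 0 -> lform x w = 0 -> 0 <= lform x x /\ (lform x x = 0 -> x = lzero).
Proof.
destruct w as [w1 w2 w3 w4 w5], x as [x1 x2 x3 x4 x5]; unfold lform; simpl.
intros Hw Hx.
pose proof (cauchy_schwarz4 x1 x2 x3 x4 w1 w2 w3 w4) as HCS.
set (P := x1*x1 + x2*x2 + x3*x3 + x4*x4) in *.
set (Q := w1*w1 + w2*w2 + w3*w3 + w4*w4) in *.
assert (HP : 0 <= P) by (unfold P; nra).
assert (HQ : 0 <= Q) by (unfold Q; nra).
assert (HX : x1*w1 + x2*w2 + x3*w3 + x4*w4 = x5 * w5) by lra.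
rewrite HX in HCS.
(* x5^2 w5^2 <= P Q < P w5^2 unless P = 0, hence x5^2 <= P. *)
assert (Hgap : 0 <= P * (w5*w5 - Q)) by nra.
assert (Hx5 : x5 * x5 <= P) by nra.
split; [lra|].
intro H0.
assert (P = 0) by nra.
unfold P in *.
assert (x1 = 0) by nra. assert (x2 = 0) by nra. assert (x3 = 0) by nra. assert (x4 = 0) by nra.
assert (x5 = 0) by nra.
subst; reflexivity.
Qed.

Lemma reverse_cauchy_schwarz f g :
  lform f f < 0 -> lform f f * lform g g <= lform f g * lform f g.
Proof.
intro Hf.
set (x := lsub (lscal (lform f f) g) (lscal (lform f g) f)).
assert (Hx : lform x f = 0) by (unfold x; autorewrite with lform; rewrite (lform_sym g f); ring).
destruct (timelike_perp_pos f x Hf Hx) as [H _].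
assert (Ex : lform x x = lform f f * (lform f f * lform g g - lform f g * lform f g)).
{ unfold x; autorewrite with lform; rewrite (lform_sym g f); ring. }
nra.
Qed.

Module RowDependence.
Import all_boot all_algebra Rstruct GRing.Theory.
Local Open Scope ring_scope.

(* Stated with MathComp's ring operations; six_rows_dependent below restates it
   with the convertible operations of the Stdlib reals. *)
Local Lemma six_rows_dependent_ring (v : nat -> nat -> R) :
  exists g : nat -> R, (exists k, (k < 6)%N /\ g k <> 0%R) /\
    forall j, (j < 5)%N ->
      (g 0%N * v 0%N j + g 1%N * v 1%N j + g 2%N * v 2%N j
       + g 3%N * v 3%N j + g 4%N * v 4%N j + g 5%N * v 5%N j = 0)%R.
Proof.
pose A : 'M[R]_(6, 5) := \matrix_(i < 6, j < 5) v i j.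
have [g gA0 [k nz_k]] : exists2 g : 'rV[R]_6, (g *m A = 0)%R & exists k, (g ord0 k != 0)%R.
  have : (kermx A != 0)%R.
    rewrite kermx_eq0 /row_free; apply/negP => /eqP rkA.
    by have := rank_leq_col A; rewrite rkA.
  case/matrix0Pn => i [k nz_ik]; exists (row i (kermx A)).
    by rewrite -row_mul mulmx_ker row0.
  by exists k; rewrite mxE.
exists (fun n => g ord0 (inord n)); split.
  by exists k; split; [exact: ltn_ord | rewrite inord_val; exact/eqP].
move=> j lt_j5; have := congr1 (fun M : 'M[R]_(1, 5) => M ord0 (inord j)) gA0.
rewrite !mxE => <-.
pose F n := (g ord0 (inord n) * A (inord n) (inord j))%R.
rewrite (eq_bigr (fun k : 'I_6 => F k)) => [|i _]; last by rewrite /F inord_val.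
rewrite -(big_mkord xpredT F) /F.
by rewrite !big_nat_recl // big_geq // addr0 !mxE !inordK // !addrA.
Qed.

Local Open Scope R_scope.

Lemma six_rows_dependent (v : nat -> nat -> R) :
  exists g : nat -> R, (exists k, (k < 6)%N /\ g k <> 0) /\
    forall j, (j < 5)%N ->
      g 0%N * v 0%N j + g 1%N * v 1%N j + g 2%N * v 2%N j
      + g 3%N * v 3%N j + g 4%N * v 4%N j + g 5%N * v 5%N j = 0.
Proof. exact: six_rows_dependent_ring. Qed.

End RowDependence.

(* Any six vectors of R^{4,1} are linearly dependent; we record the dependence
   through the linear functionals lform v_i. *)
Lemma lvec_six_dependent (v0 v1 v2 v3 v4 v5 : lvec) :
  exists g0 g1 g2 g3 g4 g5 : R,
    (g0 <> 0 \/ g1 <> 0 \/ g2 <> 0 \/ g3 <> 0 \/ g4 <> 0 \/ g5 <> 0) /\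
    forall u, g0 * lform v0 u + g1 * lform v1 u + g2 * lform v2 u
              + g3 * lform v3 u + g4 * lform v4 u + g5 * lform v5 u = 0.
Proof.
set (vs k := match k with 0 => v0 | 1 => v1 | 2 => v2 | 3 => v3 | 4 => v4 | _ => v5 end%nat).
set (coord (u : lvec) j := match j with 0 => lv1 u | 1 => lv2 u | 2 => lv3 u | 3 => lv4 u | _ => lv5 u end%nat).
destruct (RowDependence.six_rows_dependent (fun k j => coord (vs k) j)) as (g & [k [Hk Hgk]] & Hrel).
exists (g 0%nat), (g 1%nat), (g 2%nat), (g 3%nat), (g 4%nat), (g 5%nat); split.
- destruct k as [|[|[|[|[|[|k]]]]]]; tauto || discriminate.
- intro u.
  pose proof (Hrel 0%nat eq_refl) as r1; pose proof (Hrel 1%nat eq_refl) as r2;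
  pose proof (Hrel 2%nat eq_refl) as r3; pose proof (Hrel 3%nat eq_refl) as r4;
  pose proof (Hrel 4%nat eq_refl) as r5; simpl in r1, r2, r3, r4, r5.
  apply (f_equal (Rmult (lv1 u))) in r1; apply (f_equal (Rmult (lv2 u))) in r2;
  apply (f_equal (Rmult (lv3 u))) in r3; apply (f_equal (Rmult (lv4 u))) in r4;
  apply (f_equal (Rmult (lv5 u))) in r5.
  unfold lform; lra.
Qed.

Definition matching_pattern (P E : R -> Prop) (M : nat -> nat -> R) : Prop :=
  (P (M 0 1)%nat /\ P (M 2 3)%nat /\ E (M 0 2)%nat /\ E (M 0 3)%nat /\ E (M 1 2)%nat /\ E (M 1 3)%nat) \/
  (P (M 0 2)%nat /\ P (M 1 3)%nat /\ E (M 0 1)%nat /\ E (M 0 3)%nat /\ E (M 1 2)%nat /\ E (M 2 3)%nat) \/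
  (P (M 0 3)%nat /\ P (M 1 2)%nat /\ E (M 0 1)%nat /\ E (M 0 2)%nat /\ E (M 1 3)%nat /\ E (M 2 3)%nat).

Lemma matching_pattern_map (P E P' E' : R -> Prop) (M M' : nat -> nat -> R) :
  (forall i k, (i < 4)%nat -> (k < 4)%nat ->
     (P (M i k) -> P' (M' i k)) /\ (E (M i k) -> E' (M' i k))) ->
  matching_pattern P E M -> matching_pattern P' E' M'.
Proof.
intro H.
pose proof (H 0%nat 1%nat ltac:(lia) ltac:(lia)); pose proof (H 0%nat 2%nat ltac:(lia) ltac:(lia));
pose proof (H 0%nat 3%nat ltac:(lia) ltac:(lia)); pose proof (H 1%nat 2%nat ltac:(lia) ltac:(lia));
pose proof (H 1%nat 3%nat ltac:(lia) ltac:(lia)); pose proof (H 2%nat 3%nat ltac:(lia) ltac:(lia)).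
unfold matching_pattern; tauto.
Qed.

Definition qform (A B C p q p' q' : R) : R := A*p*p' + B*(p*q' + q*p') + C*q*q'.

Lemma qform_sym A B C p q p' q' : qform A B C p q p' q' = qform A B C p' q' p q.
Proof. unfold qform; ring. Qed.

Lemma qform_cross A B C p0 q0 p1 q1 p2 q2 :
  qform A B C p0 q0 p0 q0 * qform A B C p1 q1 p2 q2
  - qform A B C p0 q0 p1 q1 * qform A B C p0 q0 p2 q2
  = (A*C - B*B) * ((p0*q1 - q0*p1) * (p0*q2 - q0*p2)).
Proof. unfold qform; ring. Qed.

Lemma no_three_pairwise_neg (x y z : R) : x*y < 0 -> x*z < 0 -> y*z < 0 -> False.
Proof. intros. assert (0 <= (x*y*z)*(x*y*z)) by nra. nra. Qed.

Lemma three_pairwise_nonpos (x y z : R) :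
  x*y <= 0 -> x*z <= 0 -> y*z <= 0 -> x = 0 \/ y = 0 \/ z = 0.
Proof.
intros Hxy Hxz Hyz.
destruct (Req_dec x 0); [now left|]. destruct (Req_dec y 0); [now right; left|].
destruct (Req_dec z 0); [now right; right|].
exfalso; apply (no_three_pairwise_neg x y z).
- assert (x*y <> 0) by (apply Rmult_integral_contrapositive; tauto). lra.
- assert (x*z <> 0) by (apply Rmult_integral_contrapositive; tauto). lra.
- assert (y*z <> 0) by (apply Rmult_integral_contrapositive; tauto). lra.
Qed.

Section EuclideanPlane.
Variables A B C : R.
Hypothesis A_pos : 0 < A.
Hypothesis det_pos : 0 < A*C - B*B.
Let Q := qform A B C.

Lemma qform_pos p q : 0 <= Q p q p q /\ (Q p q p q = 0 -> p = 0 /\ q = 0).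
Proof.
unfold Q, qform.
assert (E : A * (A*p*p + B*(p*q + q*p) + C*q*q) = (A*p + B*q)*(A*p + B*q) + (A*C - B*B)*(q*q))
  by ring.
assert (H1 : 0 <= (A*p + B*q)*(A*p + B*q)) by exact (Rle_0_sqr _).
assert (H2 : 0 <= (A*C - B*B)*(q*q)) by (pose proof (Rle_0_sqr q); unfold Rsqr in *; nra).
split; [nra|].
intro H0. assert (q*q = 0) by nra. assert (q = 0) by nra. subst q.
assert (p*p = 0) by nra. split; nra.
Qed.

(* Four vectors of a Euclidean plane cannot be pairwise at obtuse angles: the
   three vectors obtuse to v0 would lie pairwise on opposite sides of v0. *)
Lemma no_four_pairwise_obtuse (p q : nat -> R) :
  ~ (forall i k, (i < 4)%nat -> (k < 4)%nat -> i <> k -> Q (p i) (q i) (p k) (q k) < 0).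
Proof.
intro H.
assert (H01 := H 0%nat 1%nat ltac:(lia) ltac:(lia) ltac:(lia)).
assert (H02 := H 0%nat 2%nat ltac:(lia) ltac:(lia) ltac:(lia)).
assert (H03 := H 0%nat 3%nat ltac:(lia) ltac:(lia) ltac:(lia)).
assert (H12 := H 1%nat 2%nat ltac:(lia) ltac:(lia) ltac:(lia)).
assert (H13 := H 1%nat 3%nat ltac:(lia) ltac:(lia) ltac:(lia)).
assert (H23 := H 2%nat 3%nat ltac:(lia) ltac:(lia) ltac:(lia)).
destruct (qform_pos (p 0%nat) (q 0%nat)) as [H00 _].
set (k i := p 0%nat * q i - q 0%nat * p i).
assert (side : forall i j, Q (p i) (q i) (p j) (q j) < 0 ->
          Q (p 0%nat) (q 0%nat) (p i) (q i) < 0 -> Q (p 0%nat) (q 0%nat) (p j) (q j) < 0 ->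
          k i * k j < 0).
{ intros i j Hij H0i H0j.
  pose proof (qform_cross A B C (p 0%nat) (q 0%nat) (p i) (q i) (p j) (q j)) as E.
  fold Q in E; unfold k.
  assert ((A*C - B*B) * ((p 0%nat * q i - q 0%nat * p i) * (p 0%nat * q j - q 0%nat * p j)) < 0)
    by nra.
  nra. }
apply (no_three_pairwise_neg (k 1%nat) (k 2%nat) (k 3%nat)); apply side; assumption.
Qed.

Lemma antipode_among r p0 q0 p1 q1 p2 q2 p3 q3 :
  0 < r ->
  Q p0 q0 p0 q0 = r -> Q p1 q1 p1 q1 = r -> Q p2 q2 p2 q2 = r -> Q p3 q3 p3 q3 = r ->
  Q p0 q0 p1 q1 <= 0 -> Q p0 q0 p2 q2 <= 0 -> Q p0 q0 p3 q3 <= 0 ->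
  Q p1 q1 p2 q2 <= 0 -> Q p1 q1 p3 q3 <= 0 -> Q p2 q2 p3 q3 <= 0 ->
  Q p0 q0 p1 q1 = -r \/ Q p0 q0 p2 q2 = -r \/ Q p0 q0 p3 q3 = -r.
Proof.
intros Hr H00 H11 H22 H33 H01 H02 H03 H12 H13 H23.
pose proof (qform_cross A B C p0 q0 p1 q1 p2 q2) as E12.
pose proof (qform_cross A B C p0 q0 p1 q1 p3 q3) as E13.
pose proof (qform_cross A B C p0 q0 p2 q2 p3 q3) as E23.
pose proof (qform_cross A B C p0 q0 p1 q1 p1 q1) as E11.
pose proof (qform_cross A B C p0 q0 p2 q2 p2 q2) as E22.
pose proof (qform_cross A B C p0 q0 p3 q3 p3 q3) as E33.
fold Q in E12, E13, E23, E11, E22, E33.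
set (D := A*C - B*B) in *.
set (k1 := p0*q1 - q0*p1) in *. set (k2 := p0*q2 - q0*p2) in *. set (k3 := p0*q3 - q0*p3) in *.
(* vi and vj lie on the same side of v0 only if one of them is parallel to v0 *)
assert (G12 : k1*k2 <= 0). { assert (D*(k1*k2) <= 0) by nra. nra. }
assert (G13 : k1*k3 <= 0). { assert (D*(k1*k3) <= 0) by nra. nra. }
assert (G23 : k2*k3 <= 0). { assert (D*(k2*k3) <= 0) by nra. nra. }
destruct (three_pairwise_nonpos k1 k2 k3 G12 G13 G23) as [h|[h|h]]; rewrite h in *.
- left. nra.
- right; left. nra.
- right; right. nra.
Qed.

Lemma antipode_eq r p0 q0 p1 q1 :
  Q p0 q0 p0 q0 = r -> Q p1 q1 p1 q1 = r -> Q p0 q0 p1 q1 = -r -> p1 = - p0 /\ q1 = - q0.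
Proof.
intros H0 H1 H01.
assert (E : Q (p0+p1) (q0+q1) (p0+p1) (q0+q1) = Q p0 q0 p0 q0 + 2 * Q p0 q0 p1 q1 + Q p1 q1 p1 q1)
  by (unfold Q, qform; ring).
destruct (qform_pos (p0+p1) (q0+q1)) as [_ [h1 h2]]; [lra|].
split; lra.
Qed.

Lemma orthogonal_cross (r : R) (p q : nat -> R) :
  0 < r ->
  (forall i, (i < 4)%nat -> Q (p i) (q i) (p i) (q i) = r) ->
  (forall i k, (i < 4)%nat -> (k < 4)%nat -> i <> k -> Q (p i) (q i) (p k) (q k) <= 0) ->
  matching_pattern (fun x => x = -r) (fun x => x = 0) (fun i k => Q (p i) (q i) (p k) (q k)).
Proof.
intros Hr Hn Ho.
assert (H00 := Hn 0%nat ltac:(lia)). assert (H11 := Hn 1%nat ltac:(lia)).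
assert (H22 := Hn 2%nat ltac:(lia)). assert (H33 := Hn 3%nat ltac:(lia)).
assert (H01 := Ho 0%nat 1%nat ltac:(lia) ltac:(lia) ltac:(lia)).
assert (H02 := Ho 0%nat 2%nat ltac:(lia) ltac:(lia) ltac:(lia)).
assert (H03 := Ho 0%nat 3%nat ltac:(lia) ltac:(lia) ltac:(lia)).
assert (H12 := Ho 1%nat 2%nat ltac:(lia) ltac:(lia) ltac:(lia)).
assert (H13 := Ho 1%nat 3%nat ltac:(lia) ltac:(lia) ltac:(lia)).
assert (H23 := Ho 2%nat 3%nat ltac:(lia) ltac:(lia) ltac:(lia)).
unfold matching_pattern; simpl.
set (p0 := p 0%nat) in *; set (p1 := p 1%nat) in *; set (p2 := p 2%nat) in *; set (p3 := p 3%nat) in *.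
set (q0 := q 0%nat) in *; set (q1 := q 1%nat) in *; set (q2 := q 2%nat) in *; set (q3 := q 3%nat) in *.
assert (S : forall x y x' y', Q x y x' y' = Q x' y' x y) by (intros; apply qform_sym).
(* v0 has an antipode vj; then the other two vectors are orthogonal to v0 and
   vj, so they are antipodal to each other. *)
destruct (antipode_among r p0 q0 p1 q1 p2 q2 p3 q3) as [E|[E|E]]; try assumption.
- destruct (antipode_eq r p0 q0 p1 q1 H00 H11 E) as [e1 e2].
  assert (Q p1 q1 p2 q2 = - Q p0 q0 p2 q2) by (rewrite e1, e2; unfold Q, qform; ring).
  assert (Q p1 q1 p3 q3 = - Q p0 q0 p3 q3) by (rewrite e1, e2; unfold Q, qform; ring).
  destruct (antipode_among r p2 q2 p0 q0 p1 q1 p3 q3) as [F|[F|F]];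
    try assumption; try (rewrite S; assumption); rewrite ?(S p2 q2 p0 q0), ?(S p2 q2 p1 q1) in F; lra.
- destruct (antipode_eq r p0 q0 p2 q2 H00 H22 E) as [e1 e2].
  assert (Q p1 q1 p2 q2 = - Q p0 q0 p1 q1) by (rewrite e1, e2; unfold Q, qform; ring).
  assert (Q p2 q2 p3 q3 = - Q p0 q0 p3 q3) by (rewrite e1, e2; unfold Q, qform; ring).
  destruct (antipode_among r p1 q1 p0 q0 p2 q2 p3 q3) as [F|[F|F]];
    try assumption; try (rewrite S; assumption); rewrite ?(S p1 q1 p0 q0) in F; lra.
- destruct (antipode_eq r p0 q0 p3 q3 H00 H33 E) as [e1 e2].
  assert (Q p1 q1 p3 q3 = - Q p0 q0 p1 q1) by (rewrite e1, e2; unfold Q, qform; ring).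
  assert (Q p2 q2 p3 q3 = - Q p0 q0 p2 q2) by (rewrite e1, e2; unfold Q, qform; ring).
  destruct (antipode_among r p1 q1 p0 q0 p2 q2 p3 q3) as [F|[F|F]];
    try assumption; try (rewrite S; assumption); rewrite ?(S p1 q1 p0 q0) in F; lra.
Qed.

End EuclideanPlane.

Lemma sym2_kernel_trivial SA SB SC g0 g1 :
  0 < SA*SC - SB*SB -> g0*SA + g1*SB = 0 -> g0*SB + g1*SC = 0 -> g0 = 0 /\ g1 = 0.
Proof.
intros Hd X1 X2.
assert (E0 : g0 * (SA*SC - SB*SB) = 0)
  by (transitivity (SC*(g0*SA + g1*SB) - SB*(g0*SB + g1*SC)); [ring | rewrite X1, X2; ring]).
assert (E1 : g1 * (SA*SC - SB*SB) = 0)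
  by (transitivity (SA*(g0*SB + g1*SC) - SB*(g0*SA + g1*SB)); [ring | rewrite X1, X2; ring]).
apply Rmult_integral in E0; apply Rmult_integral in E1; lra.
Qed.

Definition gram2 (s1 s2 : lvec) : R := lform s1 s1 * lform s2 s2 - lform s1 s2 * lform s1 s2.

Lemma edge_gram_pos (w a0 a1 a2 : lvec) :
  lform w w < 0 -> lform a1 w = lform a0 w -> lform a2 w = lform a0 w ->
  lform a0 a0 = 1 -> lform a1 a1 = 1 -> lform a2 a2 = 1 ->
  lform a0 a1 <= -1 -> lform a0 a2 <= -1 -> lform a1 a2 <= -1 ->
  0 < gram2 (lsub a1 a0) (lsub a2 a0).
Proof.
intros Hw H1w H2w H0 H1 H2 H01 H02 H12.
set (s1 := lsub a1 a0); set (s2 := lsub a2 a0).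
assert (EA : lform s1 s1 = 2 - 2 * lform a0 a1)
  by (unfold s1; autorewrite with lform; rewrite (lform_sym a1 a0); lra).
assert (EC : lform s2 s2 = 2 - 2 * lform a0 a2)
  by (unfold s2; autorewrite with lform; rewrite (lform_sym a2 a0); lra).
assert (EB : lform s1 s2 = lform a1 a2 - lform a0 a1 - lform a0 a2 + 1)
  by (unfold s1, s2; autorewrite with lform; rewrite (lform_sym a1 a0); lra).
unfold gram2; fold s1 s2.
set (SA := lform s1 s1) in *; set (SB := lform s1 s2) in *; set (SC := lform s2 s2) in *.
(* x = SA s2 - SB s1 is orthogonal to w, and lform x x = SA * gram2 s1 s2 *)
set (x := lsub (lscal SA s2) (lscal SB s1)).
assert (Hxw : lform x w = 0)
  by (unfold x, s1, s2; autorewrite with lform; rewrite H1w, H2w; ring).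
assert (Hxx : lform x x = SA * (SA*SC - SB*SB))
  by (unfold x; autorewrite with lform; rewrite (lform_sym s2 s1); fold SA SB SC; ring).
destruct (timelike_perp_pos w x Hw Hxw) as [Hpos Hzero].
destruct (Rlt_or_le 0 (SA*SC - SB*SB)) as [h|h]; [exact h|exfalso].
(* degenerate case: x = 0, which forces lform a1 a2 = 1 *)
assert (Hd : SA*SC - SB*SB = 0) by nra.
assert (Hx0 : lform x a0 = 0) by (rewrite Hzero, lform_zerol; [reflexivity | rewrite Hxx, Hd; ring]).
unfold x, s1, s2 in Hx0; autorewrite with lform in Hx0.
rewrite (lform_sym a2 a0), (lform_sym a1 a0) in Hx0.
assert (SC = SB) by nra.
assert (SA = SC) by nra.
nra.
Qed.

Definition lsum4 (u : nat -> lvec) : lvec := ladd (ladd (u 0%nat) (u 1%nat)) (ladd (u 2%nat) (u 3%nat)).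

Lemma lform_lsum4 (u : nat -> lvec) v :
  lform (lsum4 u) v = lform (u 0%nat) v + lform (u 1%nat) v + lform (u 2%nat) v + lform (u 3%nat) v.
Proof. unfold lsum4; autorewrite with lform; ring. Qed.

Lemma lsum4_timelike (u : nat -> lvec) :
  (forall i, (i < 4)%nat -> lform (u i) (u i) = 1) ->
  (forall i k, (i < 4)%nat -> (k < 4)%nat -> i <> k -> lform (u i) (u k) <= -1) ->
  lform (lsum4 u) (lsum4 u) < 0.
Proof.
intros Hn Hs.
rewrite lform_lsum4, !(lform_sym _ (lsum4 u)), !lform_lsum4.
rewrite !Hn by lia.
pose proof (Hs 0%nat 1%nat ltac:(lia) ltac:(lia) ltac:(lia)); pose proof (Hs 0%nat 2%nat ltac:(lia) ltac:(lia) ltac:(lia));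
pose proof (Hs 0%nat 3%nat ltac:(lia) ltac:(lia) ltac:(lia)); pose proof (Hs 1%nat 2%nat ltac:(lia) ltac:(lia) ltac:(lia));
pose proof (Hs 1%nat 3%nat ltac:(lia) ltac:(lia) ltac:(lia)); pose proof (Hs 2%nat 3%nat ltac:(lia) ltac:(lia) ltac:(lia)).
rewrite (lform_sym (u 1%nat) (u 0%nat)), (lform_sym (u 2%nat) (u 0%nat)), (lform_sym (u 3%nat) (u 0%nat)),
  (lform_sym (u 2%nat) (u 1%nat)), (lform_sym (u 3%nat) (u 1%nat)), (lform_sym (u 3%nat) (u 2%nat)).
lra.
Qed.

(* Dimension count in R^{4,1}.  The vectors s1, s2, s3 and the timelike wA all
   lie in the 3-space orthogonal to the Euclidean plane spanned by t1, t2, so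
   they are dependent; wA cannot take part in the dependence, since s1, s2, s3
   lie in the Euclidean space orthogonal to the timelike wB. *)
Lemma three_dependent (s1 s2 s3 t1 t2 wA wB : lvec) :
  lform wA wA < 0 -> lform wB wB < 0 ->
  lform s1 wB = 0 -> lform s2 wB = 0 -> lform s3 wB = 0 ->
  lform s1 t1 = 0 -> lform s1 t2 = 0 -> lform s2 t1 = 0 -> lform s2 t2 = 0 ->
  lform s3 t1 = 0 -> lform s3 t2 = 0 -> lform wA t1 = 0 -> lform wA t2 = 0 ->
  0 < gram2 t1 t2 ->
  exists g0 g1 g2, (g0 <> 0 \/ g1 <> 0 \/ g2 <> 0) /\
    ladd (ladd (lscal g0 s1) (lscal g1 s2)) (lscal g2 s3) = lzero.
Proof.
intros HA HB H1 H2 H3 H11 H12 H21 H22 H31 H32 Hw1 Hw2 Ht.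
destruct (lvec_six_dependent s1 s2 s3 t1 t2 wA) as (g0 & g1 & g2 & g3 & g4 & g5 & Hnz & Hrel).
(* testing the relation against t1 and t2 kills the t-coefficients *)
pose proof (Hrel t1) as R1; pose proof (Hrel t2) as R2.
rewrite H11, H21, H31, Hw1, (lform_sym t2 t1) in R1; rewrite H12, H22, H32, Hw2 in R2.
unfold gram2 in Ht.
destruct (sym2_kernel_trivial (lform t1 t1) (lform t1 t2) (lform t2 t2) g3 g4) as [G3 G4];
  [exact Ht | lra | lra |].
subst g3 g4.
set (y := ladd (ladd (lscal g0 s1) (lscal g1 s2)) (lscal g2 s3)).
assert (Hy : forall u, lform y u = - g5 * lform wA u)
  by (intro u; unfold y; autorewrite with lform; pose proof (Hrel u); lra).
(* y is orthogonal to wB, so lform y y >= 0, while lform y y = g5^2 lform wA wA *)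
assert (HyB : lform y wB = 0) by (unfold y; autorewrite with lform; rewrite H1, H2, H3; ring).
destruct (timelike_perp_pos wB y HB HyB) as [Hyy _].
assert (Eyy : lform y y = g5 * g5 * lform wA wA) by (rewrite Hy, lform_sym, Hy; ring).
assert (G5 : g5 = 0).
{ destruct (Req_dec g5 0) as [e|ne]; [exact e|exfalso].
  pose proof (Rsqr_pos_lt g5 ne); unfold Rsqr in *; nra. }
subst g5.
exists g0, g1, g2; split.
- destruct Hnz as [h|[h|[h|[h|[h|h]]]]]; tauto || lra.
- apply lform_nondegenerate; intro u; rewrite Hy; ring.
Qed.

Lemma in_plane_of_dependence (s1 s2 s3 : lvec) g0 g1 g2 :
  0 < gram2 s1 s2 -> (g0 <> 0 \/ g1 <> 0 \/ g2 <> 0) ->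
  ladd (ladd (lscal g0 s1) (lscal g1 s2)) (lscal g2 s3) = lzero ->
  exists m n, s3 = ladd (lscal m s1) (lscal n s2).
Proof.
intros Hg Hnz Hdep.
destruct (Req_dec g2 0) as [G2|G2].
- exfalso; subst g2.
  assert (R1 : lform (ladd (ladd (lscal g0 s1) (lscal g1 s2)) (lscal 0 s3)) s1 = 0)
    by (rewrite Hdep; apply lform_zerol).
  assert (R2 : lform (ladd (ladd (lscal g0 s1) (lscal g1 s2)) (lscal 0 s3)) s2 = 0)
    by (rewrite Hdep; apply lform_zerol).
  autorewrite with lform in R1, R2; rewrite (lform_sym s2 s1) in R1.
  destruct (sym2_kernel_trivial (lform s1 s1) (lform s1 s2) (lform s2 s2) g0 g1);
    [exact Hg | lra | lra | tauto].
-
  assert (solve : forall x y z, g0*x + g1*y + g2*z = 0 -> z = - g0 / g2 * x + - g1 / g2 * y).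
  { intros x y z h.
    replace z with ((g0*x + g1*y + g2*z - g0*x - g1*y) / g2) by (field; exact G2).
    rewrite h; field; exact G2. }
  exists (- g0 / g2), (- g1 / g2).
  apply lvec_ext; simpl; apply solve;
    [ apply (f_equal lv1) in Hdep | apply (f_equal lv2) in Hdep | apply (f_equal lv3) in Hdep
    | apply (f_equal lv4) in Hdep | apply (f_equal lv5) in Hdep ]; exact Hdep.
Qed.

Lemma plane_foot (a0 s1 s2 : lvec) :
  0 < gram2 s1 s2 ->
  exists al be, lform (ladd a0 (ladd (lscal al s1) (lscal be s2))) s1 = 0 /\
                lform (ladd a0 (ladd (lscal al s1) (lscal be s2))) s2 = 0.
Proof.
unfold gram2; intro Hg.
set (A := lform s1 s1) in *; set (B := lform s1 s2) in *; set (C := lform s2 s2) in *.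
exists ((B * lform a0 s2 - C * lform a0 s1) / (A*C - B*B)),
       ((B * lform a0 s1 - A * lform a0 s2) / (A*C - B*B)).
split; autorewrite with lform; rewrite ?(lform_sym s2 s1); fold A B C; field; lra.
Qed.

Lemma plane_gram (f s1 s2 : lvec) p q p' q' :
  lform f s1 = 0 -> lform f s2 = 0 ->
  lform (ladd f (ladd (lscal p s1) (lscal q s2))) (ladd f (ladd (lscal p' s1) (lscal q' s2)))
  = lform f f + qform (lform s1 s1) (lform s1 s2) (lform s2 s2) p q p' q'.
Proof.
intros H1 H2; autorewrite with lform.
rewrite (lform_sym s1 f), (lform_sym s2 f), (lform_sym s2 s1), H1, H2; unfold qform; ring.
Qed.

(* Four unit vectors a_0..a_3 and four unit vectors b_0..b_3, pairwise at
   products <= -1 within each family and at product exactly -1 across: the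
   configuration of the Gram vectors of a packing of G4 * G4'. *)
Section FourAndFour.
Variables a b : nat -> lvec.
Hypothesis a_unit : forall i, (i < 4)%nat -> lform (a i) (a i) = 1.
Hypothesis b_unit : forall j, (j < 4)%nat -> lform (b j) (b j) = 1.
Hypothesis ab_tangent : forall i j, (i < 4)%nat -> (j < 4)%nat -> lform (a i) (b j) = -1.
Hypothesis a_apart : forall i k, (i < 4)%nat -> (k < 4)%nat -> i <> k -> lform (a i) (a k) <= -1.
Hypothesis b_apart : forall j l, (j < 4)%nat -> (l < 4)%nat -> j <> l -> lform (b j) (b l) <= -1.

Lemma four_in_plane :
  let s1 := lsub (a 1%nat) (a 0%nat) in let s2 := lsub (a 2%nat) (a 0%nat) in
  0 < gram2 s1 s2 /\ exists m n, a 3%nat = ladd (a 0%nat) (ladd (lscal m s1) (lscal n s2)).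
Proof.
intros s1 s2.
set (wA := lsum4 a); set (wB := lsum4 b).
assert (HwA : lform wA wA < 0) by exact (lsum4_timelike a a_unit a_apart).
assert (HwB : lform wB wB < 0) by exact (lsum4_timelike b b_unit b_apart).
assert (HaB : forall i, (i < 4)%nat -> lform (a i) wB = -4).
{ intros i hi; unfold wB; rewrite (lform_sym _ (lsum4 b)), lform_lsum4, !(lform_sym (b _)), !ab_tangent by lia; ring. }
assert (HbA : forall j, (j < 4)%nat -> lform (b j) wA = -4).
{ intros j hj; unfold wA; rewrite (lform_sym _ (lsum4 a)), lform_lsum4, !ab_tangent by lia; ring. }
set (s3 := lsub (a 3%nat) (a 0%nat)).
set (t1 := lsub (b 1%nat) (b 0%nat)); set (t2 := lsub (b 2%nat) (b 0%nat)).
assert (Hs : forall k, (k < 4)%nat -> lform (lsub (a k) (a 0%nat)) wB = 0)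
  by (intros k hk; autorewrite with lform; rewrite !HaB by lia; ring).
assert (Ht : forall k, (k < 4)%nat -> lform wA (lsub (b k) (b 0%nat)) = 0)
  by (intros k hk; autorewrite with lform; rewrite !(lform_sym wA), !HbA by lia; ring).
assert (Hst : forall k j, (k < 4)%nat -> (j < 4)%nat -> lform (lsub (a k) (a 0%nat)) (lsub (b j) (b 0%nat)) = 0)
  by (intros k j hk hj; autorewrite with lform; rewrite !ab_tangent by lia; ring).
assert (Hgs : 0 < gram2 s1 s2).
{ apply (edge_gram_pos wB); try assumption; try (apply a_unit || apply a_apart); try lia;
    rewrite !HaB by lia; reflexivity. }
assert (Hgt : 0 < gram2 t1 t2).
{ apply (edge_gram_pos wA); try assumption; try (apply b_unit || apply b_apart); try lia;
    rewrite !HbA by lia; reflexivity. }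
split; [exact Hgs|].
destruct (three_dependent s1 s2 s3 t1 t2 wA wB) as (g0 & g1 & g2 & Hnz & Hdep);
  try (apply Hs || apply Hst || apply Ht); try lia; try assumption.
destruct (in_plane_of_dependence s1 s2 s3 g0 g1 g2 Hgs Hnz Hdep) as (m & n & Hmn).
exists m, n; rewrite <- Hmn; unfold s3; apply lvec_ext; simpl; ring.
Qed.

(* The centre f of the a-configuration: the point of the plane of the a_i
   orthogonal to that plane. *)
Lemma center :
  exists f, (forall v, (forall i, (i < 4)%nat -> lform v (a i) = -1) -> lform f v = -1) /\
    lform f f <= -1 /\
    (lform f f = -1 ->
     matching_pattern (fun x => x < -1) (fun x => x = -1) (fun i k => lform (a i) (a k))).
Proof.
destruct four_in_plane as [Hg (m & n & Ha3)].
set (s1 := lsub (a 1%nat) (a 0%nat)) in *; set (s2 := lsub (a 2%nat) (a 0%nat)) in *.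
destruct (plane_foot (a 0%nat) s1 s2 Hg) as (al & be & Hf1 & Hf2).
set (f := ladd (a 0%nat) (ladd (lscal al s1) (lscal be s2))) in *.
exists f.
(* plane coordinates of the a_i relative to the origin f *)
set (P i := match i with 0%nat => - al | 1%nat => 1 - al | 2%nat => - al | _ => m - al end).
set (Q i := match i with 0%nat => - be | 1%nat => - be | 2%nat => 1 - be | _ => n - be end).
assert (Hcoord : forall i, (i < 4)%nat -> a i = ladd f (ladd (lscal (P i) s1) (lscal (Q i) s2))).
{ intros i hi; destruct i as [|[|[|[|i]]]]; try lia; try rewrite Ha3;
    unfold f, s1, s2, P, Q; apply lvec_ext; simpl; ring. }
set (A := lform s1 s1); set (B := lform s1 s2); set (C := lform s2 s2).
set (kap := lform f f).
assert (Hgram : forall i k, (i < 4)%nat -> (k < 4)%nat ->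
          lform (a i) (a k) = kap + qform A B C (P i) (Q i) (P k) (Q k)).
{ intros i k hi hk; rewrite (Hcoord i hi), (Hcoord k hk); apply plane_gram; assumption. }
assert (HA : 0 < A).
{ pose proof (a_unit 0%nat ltac:(lia)); pose proof (a_unit 1%nat ltac:(lia)).
  pose proof (a_apart 0%nat 1%nat ltac:(lia) ltac:(lia) ltac:(lia)).
  unfold A, s1; autorewrite with lform; rewrite (lform_sym (a 1%nat) (a 0%nat)); lra. }
assert (HD : 0 < A*C - B*B) by exact Hg.
split; [|split].
- (* f is an affine combination of a_0, a_1, a_2 *)
  intros v Hv; unfold f, s1, s2; autorewrite with lform.
  rewrite !(lform_sym _ v), !Hv by lia; ring.
- (* otherwise the four a_i - f would be pairwise obtuse in a Euclidean plane *)
  apply Rnot_lt_le; intro Hk.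
  apply (no_four_pairwise_obtuse A B C HA HD P Q).
  intros i k hi hk hik.
  pose proof (Hgram i k hi hk); pose proof (a_apart i k hi hk hik).
  fold kap in Hk; lra.
- (* the a_i - f have length 2 and are pairwise non-acute *)
  intro Hk; fold kap in Hk.
  apply (matching_pattern_map (fun x => x = -2) (fun x => x = 0)
           _ _ (fun i k => qform A B C (P i) (Q i) (P k) (Q k))).
  + intros i k hi hk; rewrite (Hgram i k hi hk); split; intro; lra.
  + apply (orthogonal_cross A B C HA HD 2); [lra| |].
    * intros i hi; pose proof (Hgram i i hi hi); pose proof (a_unit i hi); lra.
    * intros i k hi hk hik; pose proof (Hgram i k hi hk); pose proof (a_apart i k hi hk hik); lra.
Qed.

End FourAndFour.

Definition four_and_four (a b : nat -> lvec) : Prop :=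
  (forall i, (i < 4)%nat -> lform (a i) (a i) = 1) /\
  (forall j, (j < 4)%nat -> lform (b j) (b j) = 1) /\
  (forall i j, (i < 4)%nat -> (j < 4)%nat -> lform (a i) (b j) = -1) /\
  (forall i k, (i < 4)%nat -> (k < 4)%nat -> i <> k -> lform (a i) (a k) <= -1) /\
  (forall j l, (j < 4)%nat -> (l < 4)%nat -> j <> l -> lform (b j) (b l) <= -1).

Lemma four_and_four_sym a b : four_and_four a b -> four_and_four b a.
Proof.
intros (Ha & Hb & Hab & HAa & HBb); repeat split; try assumption.
intros j i hj hi; rewrite lform_sym; apply Hab; assumption.
Qed.

(* The centres f of the a_i and g of
   the b_j satisfy lform f g = -1 with lform f f, lform g g <= -1, so the
   reverse Cauchy-Schwarz inequality forces lform f f = -1. *)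
Theorem four_and_four_pattern (a b : nat -> lvec) :
  four_and_four a b ->
  matching_pattern (fun x => x < -1) (fun x => x = -1) (fun i k => lform (a i) (a k)).
Proof.
intro Hab4; pose proof (four_and_four_sym a b Hab4) as Hba4.
destruct Hab4 as (Ha & Hb & Hab & HAa & HBb); destruct Hba4 as (_ & _ & Hba & _).
destruct (center a b Ha Hb Hab HAa HBb) as (f & Hf & Hff & Hpat).
destruct (center b a Hb Ha Hba HBb HAa) as (g & Hg & Hgg & _).
assert (Hfg : lform f g = -1) by (apply Hf; intros i hi; apply Hg; intros j hj; apply Hab; assumption).
pose proof (reverse_cauchy_schwarz f g ltac:(lra)) as Hrcs.
rewrite Hfg in Hrcs.
apply Hpat; nra.
Qed.

Definition add3 (x y : R3) : R3 :=
  let '(x1, x2, x3) := x in let '(y1, y2, y3) := y in (x1 + y1, x2 + y2, x3 + y3).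
Definition scal3 (k : R) (x : R3) : R3 :=
  let '(x1, x2, x3) := x in (k * x1, k * x2, k * x3).
Definition norm3 (u : R3) := sqrt (dot u u).

Lemma dot_nonneg u : 0 <= dot u u.
Proof. destruct u as [[u1 u2] u3]; simpl. pose proof (Rle_0_sqr u1); pose proof (Rle_0_sqr u2); pose proof (Rle_0_sqr u3); unfold Rsqr in *; lra. Qed.

Lemma dist2_nonneg x y : 0 <= dist2 x y.
Proof. apply dot_nonneg. Qed.

Lemma dist2_sym x y : dist2 x y = dist2 y x.
Proof. destruct x as [[x1 x2] x3]; destruct y as [[y1 y2] y3]; unfold dist2; simpl; ring. Qed.

Lemma dot_zero u : dot u u = 0 -> u = zero3.
Proof.
destruct u as [[u1 u2] u3]; simpl; intro H.
pose proof (Rle_0_sqr u1); pose proof (Rle_0_sqr u2); pose proof (Rle_0_sqr u3); unfold Rsqr in *.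
assert (u1 = 0) by nra. assert (u2 = 0) by nra. assert (u3 = 0) by nra. subst; reflexivity.
Qed.

Lemma dist2_zero x y : dist2 x y = 0 -> x = y.
Proof.
destruct x as [[x1 x2] x3]; destruct y as [[y1 y2] y3]; unfold dist2; simpl; intro H.
pose proof (Rle_0_sqr (x1-y1)); pose proof (Rle_0_sqr (x2-y2)); pose proof (Rle_0_sqr (x3-y3)); unfold Rsqr in *.
assert (x1 - y1 = 0) by nra. assert (x2 - y2 = 0) by nra. assert (x3 - y3 = 0) by nra.
f_equal; [f_equal|]; lra.
Qed.

Lemma sqrt_facts x : 0 <= x -> 0 <= sqrt x /\ sqrt x * sqrt x = x.
Proof. intro h; split; [apply sqrt_pos | apply sqrt_sqrt; exact h]. Qed.

Lemma cauchy_schwarz3 u v : dot u v <= norm3 u * norm3 v.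
Proof.
unfold norm3.
destruct (sqrt_facts (dot u u) (dot_nonneg u)) as [h1 h2].
destruct (sqrt_facts (dot v v) (dot_nonneg v)) as [h3 h4].
assert (HL : dot u v * dot u v <= dot u u * dot v v).
{ destruct u as [[u1 u2] u3]; destruct v as [[v1 v2] v3]; simpl.
  pose proof (Rle_0_sqr (u1*v2-u2*v1)); pose proof (Rle_0_sqr (u1*v3-u3*v1)); pose proof (Rle_0_sqr (u2*v3-u3*v2)); unfold Rsqr in *.
  nra. }
set (a := sqrt (dot u u)) in *. set (b := sqrt (dot v v)) in *.
assert (0 <= a * b) by nra.
destruct (Rle_lt_dec (dot u v) 0); [lra|].
assert (dot u v * dot u v <= (a*b)*(a*b)) by nra.
nra.
Qed.

Lemma norm3_triangle u v : norm3 (add3 u v) <= norm3 u + norm3 v.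
Proof.
pose proof (cauchy_schwarz3 u v) as Hc. unfold norm3 in *.
destruct (sqrt_facts (dot u u) (dot_nonneg u)) as [h1 h2].
destruct (sqrt_facts (dot v v) (dot_nonneg v)) as [h3 h4].
destruct (sqrt_facts _ (dot_nonneg (add3 u v))) as [h5 h6].
assert (E : dot (add3 u v) (add3 u v) = dot u u + 2 * dot u v + dot v v)
  by (destruct u as [[u1 u2] u3]; destruct v as [[v1 v2] v3]; simpl; ring).
set (a := sqrt (dot u u)) in *. set (b := sqrt (dot v v)) in *. set (c := sqrt (dot (add3 u v) (add3 u v))) in *.
nra.
Qed.

Definition dist3 x y := sqrt (dist2 x y).

Lemma dist3_facts x y : 0 <= dist3 x y /\ dist3 x y * dist3 x y = dist2 x y.
Proof. apply sqrt_facts, dist2_nonneg. Qed.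

Lemma dist3_sym x y : dist3 x y = dist3 y x.
Proof. unfold dist3; rewrite dist2_sym; reflexivity. Qed.

Lemma dist3_triangle x y z : dist3 x z <= dist3 x y + dist3 y z.
Proof.
unfold dist3, dist2.
replace (sub3 x z) with (add3 (sub3 x y) (sub3 y z)).
- apply norm3_triangle.
- destruct x as [[x1 x2] x3]; destruct y as [[y1 y2] y3]; destruct z as [[z1 z2] z3]; simpl; f_equal; [f_equal|]; ring.
Qed.


Lemma interior_ball c r x : 0 < r -> dist2 x c < r * r -> Defs.interior (closed_ball c r) (Some x).
Proof.
intros hr h.
destruct (dist3_facts x c) as [d0 d1].
assert (hd : dist3 x c < r) by (apply Rsqr_incrst_0; unfold Rsqr; lra).
exists (r - dist3 x c). split; [lra|].
intros [y|] hy; simpl in *; [|contradiction].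
destruct (dist3_facts y x) as [e0 e1].
assert (dist3 y x < r - dist3 x c) by (apply Rsqr_incrst_0; unfold Rsqr; lra).
pose proof (dist3_triangle y x c).
destruct (dist3_facts y c) as [f0 f1].
assert (dist3 y c < r) by lra.
nra.
Qed.

Lemma interior_exterior c r x : 0 < r -> r * r < dist2 x c -> Defs.interior (closed_exterior c r) (Some x).
Proof.
intros hr h.
destruct (dist3_facts x c) as [d0 d1].
assert (hd : r < dist3 x c) by (apply Rsqr_incrst_0; unfold Rsqr; lra).
exists (dist3 x c - r). split; [lra|].
intros [y|] hy; simpl in *; [|contradiction].
destruct (dist3_facts y x) as [e0 e1].
assert (dist3 y x < dist3 x c - r) by (apply Rsqr_incrst_0; unfold Rsqr; lra).
pose proof (dist3_triangle x y c). rewrite (dist3_sym x y) in H0.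
destruct (dist3_facts y c) as [f0 f1].
assert (r < dist3 y c) by lra.
nra.
Qed.

Lemma norm3_pos n : n <> zero3 -> 0 < norm3 n.
Proof.
intro h. unfold norm3. apply sqrt_lt_R0.
destruct (Rle_lt_or_eq_dec 0 (dot n n) (dot_nonneg n)) as [h1|h1]; [exact h1|].
exfalso; apply h, dot_zero; auto.
Qed.

Lemma norm3_sq n : norm3 n * norm3 n = dot n n.
Proof. apply sqrt_sqrt, dot_nonneg. Qed.

Lemma interior_halfspace n b x : n <> zero3 -> b < dot n x -> Defs.interior (closed_halfspace n b) (Some x).
Proof.
intros hn h.
pose proof (norm3_pos n hn) as hm.
set (m := norm3 n) in *.
exists ((dot n x - b) / (m + 1)). split.
{ apply Rdiv_lt_0_compat; lra. }
intros [y|] hy; simpl in *; [|contradiction].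
destruct (dist3_facts y x) as [e0 e1].
assert (hyx : dist3 y x < (dot n x - b) / (m + 1)).
{ apply Rsqr_incrst_0; unfold Rsqr; [lra| lra| left; apply Rdiv_lt_0_compat; lra]. }
pose proof (cauchy_schwarz3 n (sub3 x y)) as hc.
assert (E : dot n (sub3 x y) = dot n x - dot n y)
  by (destruct n as [[n1 n2] n3]; destruct x as [[x1 x2] x3]; destruct y as [[y1 y2] y3]; simpl; ring).
assert (E2 : norm3 (sub3 x y) = dist3 y x) by (unfold norm3, dist3; rewrite dist2_sym; reflexivity).
rewrite E, E2 in hc. fold m in hc.
assert (m * dist3 y x <= m * ((dot n x - b) / (m + 1))) by (apply Rmult_le_compat_l; lra).
assert (m * ((dot n x - b) / (m + 1)) < dot n x - b).
{ apply (Rmult_lt_reg_r (m+1)); [lra|]. field_simplify; [|lra]. nra. }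
lra.
Qed.

Lemma interior_exterior_infinity c r : 0 < r -> Defs.interior (closed_exterior c r) None.
Proof.
intros hr.
set (K := norm3 c + r + 1).
assert (hK : 0 < K) by (unfold K, norm3; pose proof (sqrt_pos (dot c c)); lra).
exists (/ K). split; [apply Rinv_0_lt_compat; lra|].
intros [y|] hy; simpl in *; [|exact I].
replace (/ (/ K * / K)) with (K * K) in hy by (field; lra).
destruct (dist3_facts y zero3) as [e0 e1].
assert (h1 : K < dist3 y zero3) by (apply Rsqr_incrst_0; unfold Rsqr; lra).
pose proof (dist3_triangle y c zero3).
assert (E : dist3 c zero3 = norm3 c).
{ unfold dist3, norm3, dist2. f_equal. destruct c as [[c1 c2] c3]; simpl; ring. }
destruct (dist3_facts y c) as [f0 f1].
assert (r < dist3 y c) by (unfold K in h1; lra).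
nra.
Qed.

(* The three kinds of 3-balls, their point sets, and their unit vectors in
   R^{4,1} (inversive coordinates): a ball of centre c and radius r gives
   (c/r, (|c|^2 - r^2 - 1)/2r, (|c|^2 - r^2 + 1)/2r), its complement the
   opposite vector, and the half-space <n,x> >= b gives (n/|n|, b/|n|, b/|n|). *)
Inductive shape := Ball (c : R3) (r : R) | Exterior (c : R3) (r : R) | HalfSpace (n : R3) (b : R).
Definition shape_ok s := match s with Ball _ r | Exterior _ r => 0 < r | HalfSpace n _ => n <> zero3 end.
Definition shape_set s : pt -> Prop :=
  match s with Ball c r => closed_ball c r | Exterior c r => closed_exterior c r | HalfSpace n b => closed_halfspace n b end.
Definition ball_vec (c : R3) (r : R) : lvec :=
  let K := dot c c - r * r in
  let '(x, y, z) := c in LVec (x / r) (y / r) (z / r) ((K - 1) / (2 * r)) ((K + 1) / (2 * r)).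
Definition half_vec (n : R3) (b : R) : lvec :=
  let m := norm3 n in let '(x, y, z) := n in LVec (x / m) (y / m) (z / m) (b / m) (b / m).
Definition shape_vec s := match s with Ball c r => ball_vec c r | Exterior c r => lopp (ball_vec c r) | HalfSpace n b => half_vec n b end.

Definition disjoint_interiors (A B : pt -> Prop) := forall p, ~ (Defs.interior A p /\ Defs.interior B p).

Lemma dot_sym u v : dot u v = dot v u.
Proof. destruct u as [[u1 u2] u3]; destruct v as [[v1 v2] v3]; simpl; ring. Qed.

Lemma sub3_self c : sub3 c c = zero3.
Proof. destruct c as [[x y] z]; unfold zero3; simpl; f_equal; [f_equal|]; ring. Qed.

Lemma lform_ball_ball c1 r1 c2 r2 : 0 < r1 -> 0 < r2 ->
  lform (ball_vec c1 r1) (ball_vec c2 r2) = (r1*r1 + r2*r2 - dist2 c1 c2) / (2*r1*r2).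
Proof. intros; destruct c1 as [[x1 y1] z1]; destruct c2 as [[x2 y2] z2]; unfold lform, dist2; simpl. field; lra. Qed.

Lemma lform_ball_half c r n b : 0 < r -> n <> zero3 -> lform (ball_vec c r) (half_vec n b) = (dot c n - b) / (r * norm3 n).
Proof.
intros hr hn. pose proof (norm3_pos n hn).
unfold half_vec. set (m := norm3 n) in *.
destruct c as [[x1 y1] z1]; destruct n as [[x2 y2] z2]; unfold lform; simpl. field; lra.
Qed.

Lemma lform_half_half n b n' b' : n <> zero3 -> n' <> zero3 -> lform (half_vec n b) (half_vec n' b') = dot n n' / (norm3 n * norm3 n').
Proof.
intros hn hn'. pose proof (norm3_pos n hn). pose proof (norm3_pos n' hn').
unfold half_vec. set (m := norm3 n) in *. set (m' := norm3 n') in *.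
destruct n as [[x1 y1] z1]; destruct n' as [[x2 y2] z2]; unfold lform; simpl. field; lra.
Qed.

Lemma shape_vec_unit s : shape_ok s -> lform (shape_vec s) (shape_vec s) = 1.
Proof.
destruct s as [c r|c r|n b]; simpl; intro h.
- rewrite lform_ball_ball by lra. unfold dist2. rewrite sub3_self.
  simpl. field. lra.
- rewrite lform_oppl, lform_oppr, lform_ball_ball by lra. unfold dist2. rewrite sub3_self.
  simpl. field. lra.
- rewrite lform_half_half by assumption. rewrite <- norm3_sq. pose proof (norm3_pos n h). field. lra.
Qed.

Lemma sep_ball_ball c1 r1 c2 r2 : 0 < r1 -> 0 < r2 -> disjoint_interiors (closed_ball c1 r1) (closed_ball c2 r2) ->
  (r1 + r2) * (r1 + r2) <= dist2 c1 c2.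
Proof.
intros h1 h2 HD. apply Rnot_lt_le. intro hlt.
set (t := r1 / (r1 + r2)).
set (x := add3 c1 (scal3 t (sub3 c2 c1))).
assert (E1 : dist2 x c1 = t * t * dist2 c1 c2).
{ unfold x; destruct c1 as [[a1 a2] a3]; destruct c2 as [[b1 b2] b3]; unfold dist2; simpl; ring. }
assert (E2 : dist2 x c2 = (1 - t) * (1 - t) * dist2 c1 c2).
{ unfold x; destruct c1 as [[a1 a2] a3]; destruct c2 as [[b1 b2] b3]; unfold dist2; simpl; ring. }
assert (T1 : t * (r1 + r2) = r1) by (unfold t; field; lra).
assert (T2 : (1 - t) * (r1 + r2) = r2) by (unfold t; field; lra).
assert (ht : 0 < t) by (unfold t; apply Rdiv_lt_0_compat; lra).
assert (ht' : 0 < 1 - t) by nra.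
apply (HD (Some x)). split.
- apply interior_ball; [lra|]. rewrite E1.
  assert (t * t * dist2 c1 c2 < t * t * ((r1+r2)*(r1+r2))) by (apply Rmult_lt_compat_l; nra).
  nra.
- apply interior_ball; [lra|]. rewrite E2.
  assert ((1-t) * (1-t) * dist2 c1 c2 < (1-t) * (1-t) * ((r1+r2)*(r1+r2))) by (apply Rmult_lt_compat_l; nra).
  nra.
Qed.

Lemma sep_ball_exterior c1 r1 c2 r2 : 0 < r1 -> 0 < r2 -> disjoint_interiors (closed_ball c1 r1) (closed_exterior c2 r2) ->
  dist3 c1 c2 + r1 <= r2.
Proof.
intros h1 h2 HD. apply Rnot_lt_le. intro hlt.
destruct (dist3_facts c1 c2) as [d0 d1].
set (d := dist3 c1 c2) in *.
set (s := (Rmax 0 (r2 - d) + r1) / 2).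
assert (hs1 : s < r1) by (unfold s; apply Rmax_case_strong; intros; lra).
assert (hs2 : r2 - d < s) by (unfold s; apply Rmax_case_strong; intros; lra).
assert (hs0 : 0 <= s) by (unfold s; apply Rmax_case_strong; intros; lra).
destruct (Rle_lt_or_eq_dec 0 d d0) as [dpos|dz].
- set (x := add3 c1 (scal3 (s / d) (sub3 c1 c2))).
  assert (E1 : dist2 x c1 = (s / d) * (s / d) * dist2 c1 c2).
  { unfold x; destruct c1 as [[a1 a2] a3]; destruct c2 as [[b1 b2] b3]; unfold dist2; simpl; ring. }
  assert (E2 : dist2 x c2 = (1 + s / d) * (1 + s / d) * dist2 c1 c2).
  { unfold x; destruct c1 as [[a1 a2] a3]; destruct c2 as [[b1 b2] b3]; unfold dist2; simpl; ring. }
  rewrite <- d1 in E1, E2.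
  replace ((s / d) * (s / d) * (d * d)) with (s * s) in E1 by (field; lra).
  replace ((1 + s / d) * (1 + s / d) * (d * d)) with ((d + s) * (d + s)) in E2 by (field; lra).
  apply (HD (Some x)). split.
  + apply interior_ball; [lra|]. rewrite E1. nra.
  + apply interior_exterior; [lra|]. rewrite E2. nra.
- assert (Hc : c1 = c2) by (apply dist2_zero; rewrite <- d1, <- dz; ring).
  subst c2.
  set (x := add3 c1 (s, 0, 0)).
  assert (E1 : dist2 x c1 = s * s).
  { unfold x; destruct c1 as [[a1 a2] a3]; unfold dist2; simpl; ring. }
  apply (HD (Some x)). split.
  + apply interior_ball; [lra|]. rewrite E1. nra.
  + apply interior_exterior; [lra|]. rewrite E1. nra.
Qed.

Lemma sep_ball_half c r n b : 0 < r -> n <> zero3 -> disjoint_interiors (closed_ball c r) (closed_halfspace n b) ->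
  dot c n + r * norm3 n <= b.
Proof.
intros hr hn HD. apply Rnot_lt_le. intro hlt.
pose proof (norm3_pos n hn) as hm. pose proof (norm3_sq n) as hm2.
set (m := norm3 n) in *.
set (s := (Rmax 0 ((b - dot c n) / m) + r) / 2).
assert (hq : (b - dot c n) / m < r).
{ apply (Rmult_lt_reg_r m); [lra|]. unfold Rdiv; rewrite Rmult_assoc, Rinv_l by lra. lra. }
assert (hs1 : s < r) by (unfold s; apply Rmax_case_strong; intros; lra).
assert (hs2 : (b - dot c n) / m < s) by (unfold s; apply Rmax_case_strong; intros; lra).
assert (hs0 : 0 <= s) by (unfold s; apply Rmax_case_strong; intros; lra).
set (x := add3 c (scal3 (s / m) n)).
assert (E1 : dist2 x c = (s / m) * (s / m) * dot n n).
{ unfold x; destruct c as [[a1 a2] a3]; destruct n as [[b1 b2] b3]; unfold dist2; simpl; ring. }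
assert (E2 : dot n x = dot c n + (s / m) * dot n n).
{ unfold x; destruct c as [[a1 a2] a3]; destruct n as [[b1 b2] b3]; simpl; ring. }
rewrite <- hm2 in E1, E2.
replace ((s / m) * (s / m) * (m * m)) with (s * s) in E1 by (field; lra).
replace ((s / m) * (m * m)) with (s * m) in E2 by (field; lra).
assert (b < dot c n + s * m).
{ assert (((b - dot c n) / m) * m < s * m) by (apply Rmult_lt_compat_r; lra).
  replace ((b - dot c n) / m * m) with (b - dot c n) in H by (field; lra). lra. }
apply (HD (Some x)). split.
- apply interior_ball; [lra|]. rewrite E1. nra.
- apply interior_halfspace; [exact hn|]. lra.
Qed.

Lemma sep_exterior_exterior c1 r1 c2 r2 : 0 < r1 -> 0 < r2 -> disjoint_interiors (closed_exterior c1 r1) (closed_exterior c2 r2) -> False.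
Proof. intros h1 h2 HD. apply (HD None). split; apply interior_exterior_infinity; assumption. Qed.

Lemma sep_exterior_half c r n b : 0 < r -> n <> zero3 -> disjoint_interiors (closed_exterior c r) (closed_halfspace n b) -> False.
Proof.
intros hr hn HD.
pose proof (norm3_pos n hn) as hm. pose proof (norm3_sq n) as hm2.
set (m := norm3 n) in *.
set (t := (r + Rabs (b - dot n c) / m + 1) / m).
set (x := add3 c (scal3 t n)).
assert (E1 : dist2 x c = t * t * dot n n).
{ unfold x; destruct c as [[a1 a2] a3]; destruct n as [[b1 b2] b3]; unfold dist2; simpl; ring. }
assert (E2 : dot n x = dot n c + t * dot n n).
{ unfold x; destruct c as [[a1 a2] a3]; destruct n as [[b1 b2] b3]; simpl; ring. }
rewrite <- hm2 in E1, E2.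
assert (Ht : t * m = r + Rabs (b - dot n c) / m + 1) by (unfold t; field; lra).
assert (HA : 0 <= Rabs (b - dot n c) / m) by (apply Rmult_le_pos; [apply Rabs_pos| left; apply Rinv_0_lt_compat; lra]).
assert (HA2 : Rabs (b - dot n c) / m * m = Rabs (b - dot n c)) by (field; lra).
pose proof (Rle_abs (b - dot n c)).
apply (HD (Some x)). split.
- apply interior_exterior; [lra|]. rewrite E1. replace (t * t * (m * m)) with ((t*m)*(t*m)) by ring. rewrite Ht. nra.
- apply interior_halfspace; [exact hn|]. rewrite E2. replace (t * (m * m)) with ((t * m) * m) by ring. rewrite Ht. nra.
Qed.

Lemma cauchy_schwarz3_neg u v : - (norm3 u * norm3 v) <= dot u v.
Proof.
pose proof (cauchy_schwarz3 u (scal3 (-1) v)) as h.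
assert (E : dot u (scal3 (-1) v) = - dot u v)
  by (destruct u as [[u1 u2] u3]; destruct v as [[v1 v2] v3]; simpl; ring).
assert (E2 : norm3 (scal3 (-1) v) = norm3 v)
  by (unfold norm3; f_equal; destruct v as [[v1 v2] v3]; simpl; ring).
rewrite E, E2 in h. lra.
Qed.

Lemma antiparallel n n' : n <> zero3 -> n' <> zero3 -> dot n n' = - (norm3 n * norm3 n') ->
  n' = scal3 (- (norm3 n' / norm3 n)) n.
Proof.
intros hn hn' h.
pose proof (norm3_pos n hn). pose proof (norm3_pos n' hn').
pose proof (norm3_sq n). pose proof (norm3_sq n').
set (m := norm3 n) in *. set (m' := norm3 n') in *.
assert (Z : dot (add3 (scal3 m n') (scal3 m' n)) (add3 (scal3 m n') (scal3 m' n)) = 0).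
{ transitivity (m*m*dot n' n' + 2*m*m'*dot n n' + m'*m'*dot n n).
  - destruct n as [[a1 a2] a3]; destruct n' as [[b1 b2] b3]; simpl; ring.
  - rewrite h, <- H1, <- H2. ring. }
apply dot_zero in Z.
destruct n as [[a1 a2] a3]; destruct n' as [[b1 b2] b3]; simpl in *.
injection Z; intros.
f_equal; [f_equal|]; field_simplify; try lra; apply (Rmult_eq_reg_l m); try lra; field_simplify; lra.
Qed.

(* Two half-spaces with disjoint interiors have opposite normals: otherwise a
   far point along n/|n| + n'/|n'| lies in both interiors. *)
Lemma sep_half_half_normals n b n' b' : n <> zero3 -> n' <> zero3 ->
  disjoint_interiors (closed_halfspace n b) (closed_halfspace n' b') ->
  dot n n' = - (norm3 n * norm3 n').
Proof.
intros hn hn' HD.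
pose proof (norm3_pos n hn) as hm. pose proof (norm3_pos n' hn') as hm'.
pose proof (norm3_sq n) as q. pose proof (norm3_sq n') as q'.
set (m := norm3 n) in *. set (m' := norm3 n') in *.
pose proof (cauchy_schwarz3_neg n n') as hc. fold m m' in hc.
destruct (Rle_lt_or_eq_dec _ _ hc) as [hlt|heq]; [exfalso|lra].
set (lam := m * m' + dot n n').
assert (hl : 0 < lam) by (unfold lam; lra).
set (RR := (Rabs b * m' + Rabs b' * m) / lam + 1).
set (x := scal3 RR (add3 (scal3 (/ m) n) (scal3 (/ m') n'))).
assert (E1 : dot n x = RR * (dot n n / m + dot n n' / m')).
{ unfold x; destruct n as [[a1 a2] a3]; destruct n' as [[b1 b2] b3]; simpl; field; lra. }
assert (E2 : dot n' x = RR * (dot n n' / m + dot n' n' / m')).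
{ unfold x; destruct n as [[a1 a2] a3]; destruct n' as [[b1 b2] b3]; simpl; field; lra. }
rewrite <- q in E1. rewrite <- q' in E2.
replace (m * m / m + dot n n' / m') with (lam / m') in E1 by (unfold lam; field; lra).
replace (dot n n' / m + m' * m' / m') with (lam / m) in E2 by (unfold lam; field; lra).
assert (RE1 : RR * (lam / m') = (Rabs b * m' + Rabs b' * m) / m' + lam / m') by (unfold RR; field; lra).
assert (RE2 : RR * (lam / m) = (Rabs b * m' + Rabs b' * m) / m + lam / m) by (unfold RR; field; lra).
assert (F1 : (Rabs b * m' + Rabs b' * m) / m' = Rabs b + Rabs b' * m / m') by (field; lra).
assert (F2 : (Rabs b * m' + Rabs b' * m) / m = Rabs b * m' / m + Rabs b') by (field; lra).
assert (P1 : 0 <= Rabs b' * m / m') by (apply Rmult_le_pos; [apply Rmult_le_pos; [apply Rabs_pos|lra]|left; apply Rinv_0_lt_compat; lra]).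
assert (P2 : 0 <= Rabs b * m' / m) by (apply Rmult_le_pos; [apply Rmult_le_pos; [apply Rabs_pos|lra]|left; apply Rinv_0_lt_compat; lra]).
assert (P3 : 0 < lam / m') by (apply Rdiv_lt_0_compat; lra).
assert (P4 : 0 < lam / m) by (apply Rdiv_lt_0_compat; lra).
pose proof (Rle_abs b). pose proof (Rle_abs b').
apply (HD (Some x)). split.
- apply interior_halfspace; [exact hn|]. lra.
- apply interior_halfspace; [exact hn'|]. lra.
Qed.

Lemma sep_half_half n b n' b' : n <> zero3 -> n' <> zero3 -> disjoint_interiors (closed_halfspace n b) (closed_halfspace n' b') ->
  dot n n' = - (norm3 n * norm3 n') /\ 0 <= b / norm3 n + b' / norm3 n'.
Proof.
intros hn hn' HD.
pose proof (norm3_pos n hn) as hm. pose proof (norm3_pos n' hn') as hm'.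
pose proof (norm3_sq n) as q. pose proof (norm3_sq n') as q'.
set (m := norm3 n) in *. set (m' := norm3 n') in *.
assert (Hanti : dot n n' = - (m * m')) by exact (sep_half_half_normals n b n' b' hn hn' HD).
split; [exact Hanti|].
apply Rnot_lt_le. intro hlt.
set (tau := (b / m - b' / m') / 2).
set (x := scal3 (tau / m) n).
assert (E1 : dot n x = tau / m * dot n n) by (unfold x; destruct n as [[a1 a2] a3]; simpl; ring).
assert (E2 : dot n' x = tau / m * dot n n') by (unfold x; destruct n as [[a1 a2] a3]; destruct n' as [[b1 b2] b3]; simpl; ring).
rewrite <- q in E1. rewrite Hanti in E2.
replace (tau / m * (m * m)) with (tau * m) in E1 by (field; lra).
replace (tau / m * - (m * m')) with (- tau * m') in E2 by (field; lra).
assert (B1 : b = (b / m) * m) by (field; lra).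
assert (B2 : b' = (b' / m') * m') by (field; lra).
apply (HD (Some x)). split.
- apply interior_halfspace; [exact hn|]. rewrite E1, B1. apply Rmult_lt_compat_r; [lra|]. unfold tau; lra.
- apply interior_halfspace; [exact hn'|]. rewrite E2, B2. apply Rmult_lt_compat_r; [lra|]. unfold tau; lra.
Qed.

Definition tangency_law s t := lform (shape_vec s) (shape_vec t) <= -1 /\
  (lform (shape_vec s) (shape_vec t) = -1 -> shape_vec t <> lopp (shape_vec s) -> meet_in_one_point (shape_set s) (shape_set t)) /\
  (lform (shape_vec s) (shape_vec t) < -1 -> ~ (exists p, shape_set s p /\ shape_set t p)).

Lemma div_le_eq_lt_m1 x y : 0 < y -> (x / y <= -1 <-> x <= - y) /\ (x / y = -1 <-> x = - y) /\ (x / y < -1 <-> x < - y).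
Proof.
intro hy.
assert (E : x = (x / y) * y) by (field; lra).
split; [|split]; split; intro h.
- rewrite E. nra.
- apply (Rmult_le_reg_r y); [lra|]. rewrite <- E. lra.
- rewrite E, h; ring.
- rewrite h; field; lra.
- rewrite E. nra.
- apply (Rmult_lt_reg_r y); [lra|]. rewrite <- E. lra.
Qed.

Lemma lopp_involutive v : lopp (lopp v) = v.
Proof. destruct v; apply lvec_ext; simpl; ring. Qed.

Lemma tangency_law_sym s t : tangency_law s t -> tangency_law t s.
Proof.
intros (h1 & h2 & h3). unfold tangency_law. rewrite (lform_sym (shape_vec t) (shape_vec s)).
split; [exact h1|]. split.
- intros e hne. destruct (h2 e) as (p & hp1 & hp2 & hp3).
  + intro eq. apply hne. rewrite eq, lopp_involutive. reflexivity.
  + exists p. split; [exact hp2|]. split; [exact hp1|]. intros q a b. apply hp3; assumption.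
- intros e [p [a b]]. apply (h3 e). exists p; split; assumption.
Qed.

Lemma disjoint_interiors_sym A B : disjoint_interiors A B -> disjoint_interiors B A.
Proof. intros h p [a b]. apply (h p); split; assumption. Qed.

Lemma law_ball_ball c1 r1 c2 r2 : 0 < r1 -> 0 < r2 -> disjoint_interiors (closed_ball c1 r1) (closed_ball c2 r2) -> tangency_law (Ball c1 r1) (Ball c2 r2).
Proof.
intros h1 h2 HD. pose proof (sep_ball_ball c1 r1 c2 r2 h1 h2 HD) as gc.
unfold tangency_law; simpl. rewrite lform_ball_ball by lra.
destruct (div_le_eq_lt_m1 (r1*r1 + r2*r2 - dist2 c1 c2) (2*r1*r2) ltac:(nra)) as (D1 & D2 & D3).
set (d := dist2 c1 c2) in *.
set (t := r1 / (r1 + r2)).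
assert (T1 : t * (r1 + r2) = r1) by (unfold t; field; lra).
assert (T2 : (1 - t) * (r1 + r2) = r2) by (unfold t; field; lra).
assert (ht : 0 < t) by (unfold t; apply Rdiv_lt_0_compat; lra).
assert (ht' : 0 < 1 - t) by nra.
set (p := add3 c1 (scal3 t (sub3 c2 c1))).
assert (St : forall x, dist2 x p = (1 - t) * dist2 x c1 + t * dist2 x c2 - t * (1 - t) * d).
{ intro x. unfold p, d. destruct c1 as [[a1 a2] a3]; destruct c2 as [[b1 b2] b3]; destruct x as [[x1 x2] x3];
  unfold dist2; simpl; ring. }
assert (K : (1-t) * (r1*r1) + t * (r2*r2) - t * (1-t) * ((r1+r2)*(r1+r2)) = 0).
{ unfold t; field; lra. }
split; [|split].
- apply D1. nra.
- intros e _. apply D2 in e.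
  assert (hd : d = (r1+r2)*(r1+r2)) by nra.
  exists (Some p). split; [|split].
  + simpl. assert (dist2 p c1 = t*t*d) by (unfold p, d; destruct c1 as [[a1 a2] a3]; destruct c2 as [[b1 b2] b3]; unfold dist2; simpl; ring). nra.
  + simpl. assert (dist2 p c2 = (1-t)*(1-t)*d) by (unfold p, d; destruct c1 as [[a1 a2] a3]; destruct c2 as [[b1 b2] b3]; unfold dist2; simpl; ring). nra.
  + intros [x|] qa qb; simpl in *; [|contradiction].
    f_equal. apply dist2_zero.
    pose proof (dist2_nonneg x p). rewrite St in *. rewrite hd in *.
    assert ((1 - t) * dist2 x c1 <= (1-t) * (r1*r1)) by (apply Rmult_le_compat_l; lra).
    assert (t * dist2 x c2 <= t * (r2*r2)) by (apply Rmult_le_compat_l; lra).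
    lra.
- intros e [[x|] [qa qb]]; simpl in *; [|contradiction].
  apply D3 in e.
  pose proof (dist2_nonneg x p). rewrite St in H.
  assert ((1 - t) * dist2 x c1 <= (1-t) * (r1*r1)) by (apply Rmult_le_compat_l; lra).
  assert (t * dist2 x c2 <= t * (r2*r2)) by (apply Rmult_le_compat_l; lra).
  assert (t * (1 - t) * ((r1+r2)*(r1+r2)) < t * (1-t) * d) by (apply Rmult_lt_compat_l; nra).
  lra.
Qed.

(* A ball inside the complement of a larger ball, touching it internally: they
   meet only at the point of the sphere of radius r2 in the direction c1 - c2. *)
Lemma internal_tangency c1 r1 c2 r2 :
  0 < r1 -> 0 < r2 -> 0 < dist3 c1 c2 -> dist3 c1 c2 = r2 - r1 ->
  meet_in_one_point (closed_ball c1 r1) (closed_exterior c2 r2).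
Proof.
intros h1 h2 dpos hdd.
destruct (dist3_facts c1 c2) as [d0 d1].
set (dd := dist3 c1 c2) in *.
set (d := dist2 c1 c2) in *.
set (p := add3 c2 (scal3 (r2 / dd) (sub3 c1 c2))).
set (t := dd / r2).
assert (Ht : 1 - t = r1 / r2) by (unfold t; rewrite hdd; field; lra).
assert (St : forall x, dist2 x c1 = (1 - t) * dist2 x c2 + t * dist2 x p - t * (1 - t) * dist2 p c2).
{ intro x. unfold p, t. destruct c1 as [[a1 a2] a3]; destruct c2 as [[b1 b2] b3]; destruct x as [[x1 x2] x3];
  unfold dist2; simpl; field; lra. }
assert (P2 : dist2 p c2 = (r2 / dd) * (r2 / dd) * d).
{ unfold p, d. destruct c1 as [[a1 a2] a3]; destruct c2 as [[b1 b2] b3]; unfold dist2; simpl; ring. }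
assert (P1 : dist2 p c1 = (r2 / dd - 1) * (r2 / dd - 1) * d).
{ unfold p, d. destruct c1 as [[a1 a2] a3]; destruct c2 as [[b1 b2] b3]; unfold dist2; simpl; ring. }
rewrite <- d1 in P1, P2.
replace (r2 / dd * (r2 / dd) * (dd * dd)) with (r2 * r2) in P2 by (field; lra).
replace ((r2 / dd - 1) * (r2 / dd - 1) * (dd * dd)) with ((r2 - dd) * (r2 - dd)) in P1 by (field; lra).
exists (Some p). split; [|split].
- simpl. rewrite P1, hdd. nra.
- simpl. rewrite P2. lra.
- intros [x|] qa qb; simpl in *; [|contradiction].
  f_equal. apply dist2_zero.
  pose proof (dist2_nonneg x p). pose proof (St x) as S. rewrite P2 in S.
  assert (ht : 0 < t) by (unfold t; apply Rdiv_lt_0_compat; lra).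
  assert ((1 - t) * (r2 * r2) <= (1-t) * dist2 x c2) by (apply Rmult_le_compat_l; [rewrite Ht; left; apply Rdiv_lt_0_compat; lra| lra]).
  assert (E0 : r1 * r1 - (1 - t) * (r2 * r2) + t * (1 - t) * (r2 * r2) = 0).
  { rewrite Ht. unfold t. rewrite hdd. field. lra. }
  assert (t * dist2 x p <= 0) by lra.
  nra.
Qed.

Lemma law_ball_exterior c1 r1 c2 r2 : 0 < r1 -> 0 < r2 -> disjoint_interiors (closed_ball c1 r1) (closed_exterior c2 r2) -> tangency_law (Ball c1 r1) (Exterior c2 r2).
Proof.
intros h1 h2 HD. pose proof (sep_ball_exterior c1 r1 c2 r2 h1 h2 HD) as gc.
unfold tangency_law; simpl. rewrite lform_oppr, lform_ball_ball by lra.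
destruct (div_le_eq_lt_m1 (- (r1*r1 + r2*r2 - dist2 c1 c2)) (2*r1*r2) ltac:(nra)) as (D1 & D2 & D3).
replace (- ((r1 * r1 + r2 * r2 - dist2 c1 c2) / (2 * r1 * r2))) with
  (- (r1 * r1 + r2 * r2 - dist2 c1 c2) / (2 * r1 * r2)) by (field; lra).
destruct (dist3_facts c1 c2) as [d0 d1].
set (dd := dist3 c1 c2) in *.
set (d := dist2 c1 c2) in *.
split; [|split].
- apply D1. nra.
- intros e hne. apply D2 in e.
  assert (hdd : dd = r2 - r1) by nra.
  destruct (Rle_lt_or_eq_dec 0 dd d0) as [dpos|dz].
  + exact (internal_tangency c1 r1 c2 r2 h1 h2 dpos hdd).
  + exfalso. apply hne.
    assert (c1 = c2) by (apply dist2_zero; fold d; rewrite <- d1, <- dz; ring). subst c2.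
    assert (r1 = r2) by lra. subst r2. reflexivity.
- intros e [[x|] [qa qb]]; simpl in *; [|contradiction].
  apply D3 in e.
  assert (hdd : dd < r2 - r1) by nra.
  pose proof (dist3_triangle x c1 c2) as T. fold dd in T.
  destruct (dist3_facts x c1) as [e0 e1]. destruct (dist3_facts x c2) as [f0 f1].
  assert (dist3 x c1 <= r1) by (apply Rsqr_incr_0_var; unfold Rsqr; lra).
  assert (r2 <= dist3 x c2) by (apply Rsqr_incr_0_var; unfold Rsqr; lra).
  lra.
Qed.

Lemma law_ball_half c r n b : 0 < r -> n <> zero3 -> disjoint_interiors (closed_ball c r) (closed_halfspace n b) -> tangency_law (Ball c r) (HalfSpace n b).
Proof.
intros hr hn HD. pose proof (sep_ball_half c r n b hr hn HD) as gc.
pose proof (norm3_pos n hn) as hm. pose proof (norm3_sq n) as hm2.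
unfold tangency_law; simpl. rewrite lform_ball_half by assumption.
set (m := norm3 n) in *.
destruct (div_le_eq_lt_m1 (dot c n - b) (r * m) ltac:(nra)) as (D1 & D2 & D3).
split; [|split].
- apply D1. lra.
- intros e _. apply D2 in e.
  set (p := add3 c (scal3 (r / m) n)).
  assert (St : forall x, dist2 x p = dist2 x c - 2 * (r / m) * (dot n x - dot n c) + (r / m) * (r / m) * dot n n).
  { intro x. unfold p. destruct c as [[a1 a2] a3]; destruct n as [[b1 b2] b3]; destruct x as [[x1 x2] x3];
    unfold dist2; simpl; ring. }
  assert (P1 : dist2 p c = (r / m) * (r / m) * dot n n).
  { unfold p. destruct c as [[a1 a2] a3]; destruct n as [[b1 b2] b3]; unfold dist2; simpl; ring. }
  assert (P2 : dot n p = dot n c + (r / m) * dot n n).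
  { unfold p. destruct c as [[a1 a2] a3]; destruct n as [[b1 b2] b3]; simpl; ring. }
  rewrite <- hm2 in St, P1, P2.
  replace (r / m * (r / m) * (m * m)) with (r * r) in St, P1 by (field; lra).
  replace (r / m * (m * m)) with (r * m) in P2 by (field; lra).
  rewrite (dot_sym n c) in P2, St.
  exists (Some p). split; [|split].
  + simpl. lra.
  + simpl. lra.
  + intros [x|] qa qb; simpl in *; [|contradiction].
    f_equal. apply dist2_zero.
    pose proof (dist2_nonneg x p). rewrite St in *.
    assert (2 * (r / m) * (b - dot c n) <= 2 * (r / m) * (dot n x - dot c n)).
    { apply Rmult_le_compat_l; [|lra]. assert (0 < r / m) by (apply Rdiv_lt_0_compat; lra). lra. }
    assert (2 * (r / m) * (b - dot c n) = 2 * r * r) by (rewrite <- (Rplus_0_r b); replace (b + 0 - dot c n) with (r * m) by lra; field; lra).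
    lra.
- intros e [[x|] [qa qb]]; simpl in *; [|contradiction].
  apply D3 in e.
  pose proof (cauchy_schwarz3 n (sub3 x c)) as hc.
  assert (E : dot n (sub3 x c) = dot n x - dot c n)
    by (destruct n as [[n1 n2] n3]; destruct x as [[x1 x2] x3]; destruct c as [[c1 c2] c3]; simpl; ring).
  assert (E2 : norm3 (sub3 x c) = dist3 x c) by reflexivity.
  rewrite E, E2 in hc. fold m in hc.
  destruct (dist3_facts x c) as [e0 e1].
  assert (dist3 x c <= r) by (apply Rsqr_incr_0_var; unfold Rsqr; lra).
  assert (m * dist3 x c <= m * r) by (apply Rmult_le_compat_l; lra).
  lra.
Qed.

Lemma law_half_half n b n' b' : n <> zero3 -> n' <> zero3 -> disjoint_interiors (closed_halfspace n b) (closed_halfspace n' b') -> tangency_law (HalfSpace n b) (HalfSpace n' b').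
Proof.
intros hn hn' HD. destruct (sep_half_half n b n' b' hn hn' HD) as [ha hs].
pose proof (antiparallel n n' hn hn' ha) as hap.
pose proof (norm3_pos n hn) as hm. pose proof (norm3_pos n' hn') as hm'.
unfold tangency_law; simpl. rewrite lform_half_half by assumption.
set (m := norm3 n) in *. set (m' := norm3 n') in *.
assert (L1 : dot n n' / (m * m') = -1) by (rewrite ha; field; lra).
rewrite L1.
split; [lra|split; [|lra]].
intros _ hne.
assert (hpos : 0 < b / m + b' / m').
{ destruct (Rle_lt_or_eq_dec _ _ hs) as [h|h]; [exact h|exfalso]. apply hne.
  unfold half_vec. fold m m'. rewrite hap.
  destruct n as [[a1 a2] a3]; simpl. apply lvec_ext; simpl.
  all: try (field; lra).
  all: lra. }
exists None. split; [exact I|]. split; [exact I|].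
intros [x|] qa qb; simpl in *; [|reflexivity].
exfalso.
assert (E : dot n' x = - (m' / m) * dot n x).
{ rewrite hap. destruct n as [[a1 a2] a3]; destruct x as [[x1 x2] x3]; simpl; ring. }
rewrite E in qb.
assert (b' / m' <= - (dot n x / m)).
{ apply (Rmult_le_reg_r m'); [lra|]. replace (b' / m' * m') with b' by (field; lra).
  replace (- (dot n x / m) * m') with (- (m' / m) * dot n x) by (field; lra). exact qb. }
assert (b / m <= dot n x / m).
{ apply Rmult_le_compat_r; [left; apply Rinv_0_lt_compat; lra| exact qa]. }
lra.
Qed.

Theorem tangency_law_of_disjoint s t : shape_ok s -> shape_ok t -> disjoint_interiors (shape_set s) (shape_set t) -> tangency_law s t.
Proof.
destruct s as [c1 r1|c1 r1|n1 b1]; destruct t as [c2 r2|c2 r2|n2 b2]; intros h1 h2 HD; simpl in h1, h2.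
- apply law_ball_ball; assumption.
- apply law_ball_exterior; assumption.
- apply law_ball_half; assumption.
- apply tangency_law_sym, law_ball_exterior; try assumption. apply disjoint_interiors_sym; assumption.
- exfalso; exact (sep_exterior_exterior c1 r1 c2 r2 h1 h2 HD).
- exfalso; exact (sep_exterior_half c1 r1 n2 b2 h1 h2 HD).
- apply tangency_law_sym, law_ball_half; try assumption. apply disjoint_interiors_sym; assumption.
- exfalso; exact (sep_exterior_half c2 r2 n1 b1 h2 h1 (disjoint_interiors_sym _ _ HD)).
- apply law_half_half; assumption.
Qed.

Lemma is_3ball_shape (X : pt -> Prop) : is_3ball X -> exists s, shape_ok s /\ same_set X (shape_set s).
Proof.
intros [(c & r & hr & hs)|[(c & r & hr & hs)|(n & b & hn & hs)]].
- exists (Ball c r); split; assumption.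
- exists (Exterior c r); split; assumption.
- exists (HalfSpace n b); split; assumption.
Qed.

Lemma interior_same_set X Y p : same_set X Y -> Defs.interior X p -> Defs.interior Y p.
Proof. intros h (e & he & H); exists e; split; [exact he|]; intros q hq; apply h, H, hq. Qed.

Lemma meet_same_set X X' Y Y' :
  same_set X X' -> same_set Y Y' -> meet_in_one_point X Y -> meet_in_one_point X' Y'.
Proof.
intros hx hy (p & a & b & c); exists p; split; [apply hx, a|]; split; [apply hy, b|].
intros q qa qb; apply c; [apply hx, qa | apply hy, qb].
Qed.

Lemma same_set_sym X Y : same_set X Y -> same_set Y X.
Proof. intros h p; split; apply h. Qed.

Theorem packing_gram (V : Type) (adj : V -> V -> Prop) :
  ball3_packable adj ->
  exists w : V -> lvec,
    (forall v, lform (w v) (w v) = 1) /\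
    (forall u v, u <> v -> lform (w u) (w v) <= -1) /\
    (forall u v, u <> v -> adj u v -> lform (w u) (w v) = -1) /\
    (forall u v, u <> v -> lform (w u) (w v) = -1 -> ~ adj u v -> w v = lopp (w u)).
Proof.
intros (B & HB & HD & HT).
destruct (functional_choice (fun v s => shape_ok s /\ same_set (B v) (shape_set s)))
  as (sh & Hsh); [intro v; apply is_3ball_shape, HB|].
assert (Hlaw : forall u v, u <> v -> tangency_law (sh u) (sh v)).
{ intros u v huv; apply tangency_law_of_disjoint; try apply Hsh.
  intros p [iu iv]; apply (HD u v huv p); split.
  - apply (interior_same_set (shape_set (sh u))); [apply same_set_sym, Hsh | exact iu].
  - apply (interior_same_set (shape_set (sh v))); [apply same_set_sym, Hsh | exact iv]. }
exists (fun v => shape_vec (sh v)); split; [|split; [|split]].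
- intro v; apply shape_vec_unit, Hsh.
- intros u v huv; apply (Hlaw u v huv).
- intros u v huv hadj.
  destruct (Hlaw u v huv) as (Hle & _ & Hlt).
  destruct (Rle_lt_or_eq_dec _ _ Hle) as [hlt|heq]; [exfalso|exact heq].
  apply (Hlt hlt).
  destruct (proj1 (HT u v huv) hadj) as (p & pu & pv & _).
  exists p; split; [apply (proj2 (Hsh u)), pu | apply (proj2 (Hsh v)), pv].
- intros u v huv heq hnadj.
  destruct (classic (shape_vec (sh v) = lopp (shape_vec (sh u)))) as [e|ne]; [exact e|].
  exfalso; apply hnadj, (proj2 (HT u v huv)).
  apply (meet_same_set (shape_set (sh u)) _ (shape_set (sh v))); try (apply same_set_sym, Hsh).
  apply (Hlaw u v huv); assumption.
Qed.

From mathcomp Require Import all_boot.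

(* In the join G * G', two vertices on the same side have a common neighbour on
   the other side, so their Gram vectors are not opposite: product -1 then
   means adjacency. *)
Lemma same_side_adjacency (V : Type) (adj : V -> V -> Prop) (w : V -> lvec) (u v t : V) :
  (forall u v, u <> v -> adj u v -> lform (w u) (w v) = -1) ->
  (forall u v, u <> v -> lform (w u) (w v) = -1 -> ~ adj u v -> w v = lopp (w u)) ->
  (forall u v, adj u v \/ ~ adj u v) ->
  u <> v -> u <> t -> v <> t -> adj u t -> adj v t ->
  (adj u v <-> lform (w u) (w v) = -1).
Proof.
move=> w_tangent w_opp adj_dec huv hut hvt aut avt; split; first exact: w_tangent.
move=> huv1; case: (adj_dec u v) => // hn.
have wv := w_opp u v huv huv1 hn.
have := w_tangent v t hvt avt; rewrite wv lform_oppl (w_tangent u t hut aut); lra.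
Qed.

Lemma inord_inj4 (i k : nat) : (i < 4)%coq_nat -> (k < 4)%coq_nat -> i <> k ->
  (inord i : 'I_4) <> inord k.
Proof. by move=> /ltP hi /ltP hk hik /(congr1 val) /=; rewrite !inordK. Qed.

Lemma join_gram (G G' : rel 'I_4) :
  ball3_packable (graph_join G G') ->
  exists a b : nat -> lvec, four_and_four a b /\
    (forall x y : 'I_4, x <> y -> (G x y <-> lform (a x) (a y) = -1)) /\
    (forall x y : 'I_4, x <> y -> (G' x y <-> lform (b x) (b y) = -1)).
Proof.
case/packing_gram=> w [w_unit [w_apart [w_tangent w_opp]]].
have adj_dec u v : graph_join G G' u v \/ ~ graph_join G G' u v.
  by case: u v => [x|x] [y|y] /=; [case: (G x y) | left | left | case: (G' x y)]; auto.
exists (fun i => w (inl (inord i))), (fun i => w (inr (inord i))).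
split; [|split].
- split; [|split; [|split; [|split]]] => [i _|i _|i j _ _|i k hi hk hik|i k hi hk hik].
  + exact: w_unit.
  + exact: w_unit.
  + exact: w_tangent.
  + by apply: w_apart => -[]; apply: inord_inj4.
  + by apply: w_apart => -[]; apply: inord_inj4.
- move=> x y hxy; rewrite !inord_val.
  by apply: (same_side_adjacency _ _ w (inl x) (inl y) (inr ord0) w_tangent w_opp adj_dec) => // -[].
- move=> x y hxy; rewrite !inord_val.
  by apply: (same_side_adjacency _ _ w (inr x) (inr y) (inl ord0) w_tangent w_opp adj_dec) => // -[].
Qed.

Lemma C4_sym : symmetric C4.
Proof. by move=> x y; rewrite /C4 orbC. Qed.

Lemma C4_irr : irreflexive C4.
Proof. by case=> [[|[|[|[|k]]]] hk]. Qed.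

Lemma iso_C4_by_relabelling (G : rel 'I_4) (g : nat -> nat) :
  symmetric G -> irreflexive G ->
  (forall k, (k < 4)%N -> (g k < 4)%N) -> (forall k, (k < 4)%N -> g (g k) = k) ->
  (forall x y : 'I_4, (x < y)%N -> G x y = C4 (inord (g x)) (inord (g y))) ->
  graph_iso4 G C4.
Proof.
move=> Gsym Girr g4 gK HG.
have fK : cancel (fun x : 'I_4 => inord (g x) : 'I_4) (fun x : 'I_4 => inord (g x)).
  by move=> x; apply/val_inj; rewrite /= !inordK ?gK ?g4.
exists (fun x : 'I_4 => inord (g x)); split; first by exists (fun x : 'I_4 => inord (g x)).
move=> x y; case: (ltngtP x y) => [lt_xy|lt_yx|eq_xy]; first exact: HG.
  by rewrite Gsym C4_sym; apply: HG.
by rewrite (val_inj eq_xy) Girr C4_irr.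
Qed.

(* A graph on 'I_4 whose edges are the pairs where M equals -1, where M
   follows a perfect-matching pattern, is a 4-cycle: the complement of a perfect
   matching in K4. *)
Lemma iso_C4_of_pattern (G : rel 'I_4) (M : nat -> nat -> R) :
  symmetric G -> irreflexive G ->
  (forall x y : 'I_4, x <> y -> (G x y <-> M x y = -1)) ->
  matching_pattern (fun x => x < -1) (fun x => x = -1) M ->
  graph_iso4 G C4.
Proof.
move=> Gsym Girr HGM pat.
have edge (x y : 'I_4) : x != y -> M x y = -1 -> G x y = true.
  by move=> /eqP hxy; case: (HGM x y hxy).
have non_edge (x y : 'I_4) : x != y -> M x y < -1 -> G x y = false.
  move=> /eqP hxy hlt; apply/negbTE/negP => /(HGM x y hxy); lra.
(* the relabelling sends the two non-edges of G to the two diagonals of C4 *)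
case: pat => [[p01 [p23 [e02 [e03 [e12 e13]]]]]|[[p02 [p13 [e01 [e03 [e12 e23]]]]]|[p03 [p12 [e01 [e02 [e13 e23]]]]]]].
- apply: (iso_C4_by_relabelling G (fun k => match k with 1 => 2 | 2 => 1 | k => k end)%N) => //.
  + by move=> [|[|[|[|k]]]].
  + by move=> [|[|[|[|k]]]].
  + move=> [[|[|[|[|x]]]] hx] // [[|[|[|[|y]]]] hy] // _; rewrite /C4 /= !inordK //=;
      by [apply: edge | apply: non_edge].
- apply: (iso_C4_by_relabelling G id) => //.
  move=> [[|[|[|[|x]]]] hx] // [[|[|[|[|y]]]] hy] // _; rewrite /C4 /= !inordK //=;
    by [apply: edge | apply: non_edge].
- apply: (iso_C4_by_relabelling G (fun k => match k with 2 => 3 | 3 => 2 | k => k end)%N) => //.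
  + by move=> [|[|[|[|k]]]].
  + by move=> [|[|[|[|k]]]].
  + move=> [[|[|[|[|x]]]] hx] // [[|[|[|[|y]]]] hy] // _; rewrite /C4 /= !inordK //=;
      by [apply: edge | apply: non_edge].
Qed.

Theorem corollary3p10 (G G' : rel 'I_4) :
  simple_graph4 G -> simple_graph4 G' ->
  ball3_packable (graph_join G G') ->
  graph_iso4 G C4 /\ graph_iso4 G' C4.
Proof.
move=> [Gsym Girr] [G'sym G'irr] /join_gram [a [b [ab [Ga G'b]]]].
split.
- apply: (iso_C4_of_pattern G (fun i k => lform (a i) (a k)) Gsym Girr Ga).
  exact: four_and_four_pattern a b ab.
- apply: (iso_C4_of_pattern G' (fun i k => lform (b i) (b k)) G'sym G'irr G'b).
  exact: four_and_four_pattern b a (four_and_four_sym a b ab).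
Qed.
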